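(* Let $\mathsf{V}$ be a variety of $\mathcal{L}$-algebras that has equationally definable principal congruences. If $\mathsf{V}$ is coherent and has the amalgamation property and the equational variable restriction property, then $\mathrm{Th}(\mathsf{V})$ has a model completion.
   Context: $\mathcal{L}$ is an algebraic first-order language with at least one constant symbol $c$; $\bot$ is $\neg(c\approx c)$. $\mathsf{V}\models\alpha$ means all members satisfy $\alpha$ under all assignments. A model completion of a theory $T$ is a model complete theory $T^*$ with the same universal consequences as $T$ such that for every model $M$ of $T$, $T^*$ plus the diagram of $M$ is complete. Equationally definable principal congruences: there is a conjunction of equations $\alpha(x_1,x_2,y_1,y_2)$ such that for all $\mathbf{A}\in\mathsf{V}$ and $a_1,a_2,b_1,b_2\in A$, $(a_1,a_2)$ lies in the congruence of $\mathbf{A}$ generated by $(b_1,b_2)$ iff $\mathbf{A}\models\alpha(a_1,a_2,b_1,b_2)$. Coherent: every finitely generated subalgebra of a finitely presented member of $\mathsf{V}$ is finitely presented. Amalgamation property: for $\mathbf{A},\mathbf{B},\mathbf{C}\in\mathsf{V}$ and embeddings $f\colon\mathbf{A}\to\mathbf{B}$, $g\colon\mathbf{A}\to\mathbf{C}$ there are $\mathbf{D}\in\mathsf{V}$ and embeddings $h,k$ with $hf=kg$. Equational variable restriction property: for every finite set of variables $\overline{x}$, variable $y\notin\overline{x}$ and conjunction of equations $\gamma(\overline{x},y)$, there is a formula $\pi(\overline{x})$ that is either $\bot$ or a conjunction of equations with $\mathsf{V}\models\pi\to\gamma$ and such that for every conjunction of equations $\varphi(\overline{x})$, $\mathsf{V}\models\varphi\to\gamma$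 implies $\mathsf{V}\models\varphi\to\pi$. *)

From mathcomp Require Import all_boot.
From Stdlib Require List.

Unset Implicit Arguments.
Unset Strict Implicit.
Unset Printing Implicit Defensive.

Section FOL.

Variable F : Type.
Variable ar : F -> nat.

Record algebra := Algebra {
  carrier :> Type;
  ops : forall f : F, ('I_(ar f) -> carrier) -> carrier }.
Arguments ops a f _ : clear implicits.

(* ---------------- terms and formulas ----------------
   Terms over variables indexed by nat, with extra constant symbols from C
   (C = void gives L-terms, C = carrier M gives L(M)-terms for diagrams). *)
Inductive term (C : Type) : Type :=
| Var of nat
| Cst of C
| App (f : F) of ('I_(ar f) -> term C).
Arguments Var {C}.
Arguments Cst {C}.
Arguments App {C} f _.

Inductive form (C : Type) : Type :=
| FEq of term C & term C
| FNot of form C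
| FAnd of form C & form C
| FOr of form C & form C
| FImp of form C & form C
| FAll of nat & form C
| FEx of nat & form C.
Arguments FEq {C}. Arguments FNot {C}. Arguments FAnd {C}. Arguments FOr {C}.
Arguments FImp {C}. Arguments FAll {C}. Arguments FEx {C}.

Definition eqn := (term void * term void)%type.

Fixpoint tmap {C D : Type} (g : C -> D) (t : term C) : term D :=
  match t with
  | Var n => Var n
  | Cst k => Cst (g k)
  | App f args => App f (fun i => tmap g (args i))
  end.

Fixpoint fmap {C D : Type} (g : C -> D) (p : form C) : form D :=
  match p with
  | FEq t1 t2 => FEq (tmap g t1) (tmap g t2)
  | FNot q => FNot (fmap g q)
  | FAnd q r => FAnd (fmap g q) (fmap g r)
  | FOr q r => FOr (fmap g q) (fmap g r)
  | FImp q r => FImp (fmap g q) (fmap g r)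
  | FAll n q => FAll n (fmap g q)
  | FEx n q => FEx n (fmap g q)
  end.

Fixpoint toccurs {C : Type} (n : nat) (t : term C) : Prop :=
  match t with
  | Var m => m = n
  | Cst _ => False
  | App f args => exists i, toccurs n (args i)
  end.

Fixpoint ffree {C : Type} (n : nat) (p : form C) : Prop :=
  match p with
  | FEq t1 t2 => toccurs n t1 \/ toccurs n t2
  | FNot q => ffree n q
  | FAnd q r | FOr q r | FImp q r => ffree n q \/ ffree n r
  | FAll m q | FEx m q => m <> n /\ ffree n q
  end.

Definition sentence {C : Type} (p : form C) : Prop := forall n, ~ ffree n p.

Fixpoint qfree {C : Type} (p : form C) : Prop :=
  match p with
  | FEq _ _ => True
  | FNot q => qfree q
  | FAnd q r | FOr q r | FImp q r => qfree q /\ qfree r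
  | FAll _ _ | FEx _ _ => False
  end.

Inductive universal {C : Type} : form C -> Prop :=
| univ_qf p : qfree p -> universal p
| univ_all n p : universal p -> universal (FAll n p).

Definition tvars_in {C : Type} (X : nat -> Prop) (t : term C) : Prop :=
  forall n, toccurs n t -> X n.
Definition eqns_vars_in (X : nat -> Prop) (E : seq eqn) : Prop :=
  forall p, List.In p E -> tvars_in X p.1 /\ tvars_in X p.2.

(* a conjunction of equations (the empty conjunction is x0 = x0, i.e. true) *)
Definition conj_eqs (E : seq eqn) : form void :=
  foldr (fun p q => FAnd (FEq (tmap id p.1) (tmap id p.2)) q)
        (FEq (Var 0) (Var 0)) E.

Section Semantics.
Variable A : algebra.
Variable C : Type.
Variable kappa : C -> A.

Fixpoint eval (v : nat -> A) (t : term C) : A :=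
  match t with
  | Var n => v n
  | Cst k => kappa k
  | App f args => ops A f (fun i => eval v (args i))
  end.

Definition upd (v : nat -> A) (n : nat) (a : A) : nat -> A :=
  fun m => if m == n then a else v m.

Fixpoint sat (v : nat -> A) (p : form C) : Prop :=
  match p with
  | FEq t1 t2 => eval v t1 = eval v t2
  | FNot q => ~ sat v q
  | FAnd q r => sat v q /\ sat v r
  | FOr q r => sat v q \/ sat v r
  | FImp q r => sat v q -> sat v r
  | FAll n q => forall a, sat (upd v n a) q
  | FEx n q => exists a, sat (upd v n a) q
  end.

End Semantics.
Arguments eval {A C} kappa v t.
Arguments upd {A} v n a.
Arguments sat {A C} kappa v p.

Definition novoid (A : Type) : void -> A := fun x => match x with end.

Definition models_th {C : Type} (T : form C -> Prop) (A : algebra)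
  (kappa : C -> A) : Prop :=
  forall p, T p -> forall v, sat kappa v p.

Definition entails {C : Type} (T : form C -> Prop) (p : form C) : Prop :=
  forall (A : algebra) (kappa : C -> A), models_th T A kappa ->
    forall v, sat kappa v p.

Definition complete_th {C : Type} (T : form C -> Prop) : Prop :=
  (exists (A : algebra) (kappa : C -> A), models_th T A kappa) /\
  forall p, sentence p -> entails T p \/ entails T (FNot p).

Definition hom {A B : algebra} (h : A -> B) : Prop :=
  forall f (args : 'I_(ar f) -> A), h (ops A f args) = ops B f (fun i => h (args i)).

Definition embedding {A B : algebra} (h : A -> B) : Prop :=
  hom h /\ injective h.

Definition elementary {A B : algebra} (h : A -> B) : Prop :=
  forall (p : form void) (v : nat -> A),
    sat (novoid A) v p <-> sat (novoid B) (fun n => h (v n)) p.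

Definition Lmodel (T : form void -> Prop) (A : algebra) : Prop :=
  models_th T A (novoid A).

Definition model_complete (T : form void -> Prop) : Prop :=
  forall (A B : algebra) (h : A -> B),
    Lmodel T A -> Lmodel T B -> embedding h -> elementary h.

Definition diagram (M : algebra) : form M -> Prop :=
  fun p => sentence p /\
    (exists t1 t2, p = FEq t1 t2 \/ p = FNot (FEq t1 t2)) /\
    forall v, sat (fun x : M => x) v p.

Definition th_plus_diagram (T : form void -> Prop) (M : algebra) : form M -> Prop :=
  fun p => (exists q, T q /\ p = fmap (novoid M) q) \/ diagram M p.

Definition model_completion (T Ts : form void -> Prop) : Prop :=
  (forall p, Ts p -> sentence p) /\
  model_complete Ts /\
  (forall p, sentence p -> universal p -> (entails T p <-> entails Ts p)) /\
  (forall M : algebra, Lmodel T M -> complete_th (th_plus_diagram Ts M)).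

Definition has_model_completion (T : form void -> Prop) : Prop :=
  exists Ts, model_completion T Ts.

Definition eqn_holds {A : algebra} (v : nat -> A) (p : eqn) : Prop :=
  eval (novoid A) v p.1 = eval (novoid A) v p.2.

Definition is_variety (V : algebra -> Prop) : Prop :=
  exists Eqs : eqn -> Prop,
    forall A, V A <-> (forall p, Eqs p -> forall v : nat -> A, eqn_holds v p).

Definition Vmodels (V : algebra -> Prop) (p : form void) : Prop :=
  forall A, V A -> forall v, sat (novoid A) v p.

Definition ThV (V : algebra -> Prop) : form void -> Prop :=
  fun p => sentence p /\ Vmodels V p.

Definition congruence {A : algebra} (th : A -> A -> Prop) : Prop :=
  (forall a, th a a) /\ (forall a b, th a b -> th b a) /\
  (forall a b d, th a b -> th b d -> th a d) /\
  (forall f (a b : 'I_(ar f) -> A), (forall i, th (a i) (b i)) ->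
     th (ops A f a) (ops A f b)).

Definition in_Cg {A : algebra} (b1 b2 a1 a2 : A) : Prop :=
  forall th, congruence th -> th b1 b2 -> th a1 a2.

Definition EDPC (V : algebra -> Prop) : Prop :=
  exists alpha : seq eqn,
    eqns_vars_in (fun n => n < 4) alpha /\
    forall A, V A -> forall a1 a2 b1 b2 : A,
      in_Cg b1 b2 a1 a2 <->
      sat (novoid A) (fun n => nth a1 [:: a1; a2; b1; b2] n) (conj_eqs alpha).

Inductive gen {A : algebra} (S : A -> Prop) : A -> Prop :=
| gen_base x : S x -> gen S x
| gen_op f (args : 'I_(ar f) -> A) :
    (forall i, gen S (args i)) -> gen S (ops A f args).

Definition subalg {A : algebra} (S : A -> Prop) : algebra :=
  @Algebra {x : A | gen S x}
    (fun f args => exist _ (ops A f (fun i => proj1_sig (args i)))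
                          (@gen_op A S f _ (fun i => proj2_sig (args i)))).

Definition first_n {A : Type} (n : nat) (g : nat -> A) : A -> Prop :=
  fun y => exists2 i, i < n & y = g i.

Definition fin_pres (V : algebra -> Prop) (A : algebra) : Prop :=
  V A /\
  exists (n : nat) (E : seq eqn) (g : nat -> A),
    eqns_vars_in (fun m => m < n) E /\
    (forall p, List.In p E -> eqn_holds g p) /\
    (forall x, gen (first_n n g) x) /\
    (forall B : algebra, V B -> forall w : nat -> B,
       (forall p, List.In p E -> eqn_holds w p) ->
       exists h : A -> B, hom h /\ forall i, i < n -> h (g i) = w i).

Definition coherent (V : algebra -> Prop) : Prop :=
  forall A, fin_pres V A ->
    forall (n : nat) (g : nat -> A), fin_pres V (subalg (first_n n g)).

Definition AP (V : algebra -> Prop) : Prop :=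
  forall (A B C : algebra) (f : A -> B) (g : A -> C),
    V A -> V B -> V C -> embedding f -> embedding g ->
    exists (D : algebra) (h : B -> D) (k : C -> D),
      V D /\ embedding h /\ embedding k /\ forall a, h (f a) = k (g a).

Section Bot.
Variable c : F.
Hypothesis hc : ar c = 0.

Lemma ord_ar0 : 'I_(ar c) -> False.
Proof. by case=> i; rewrite hc. Qed.

Definition cterm : term void := App c (fun i => False_rect _ (ord_ar0 i)).

Definition fbot : form void := FNot (FEq cterm cterm).

Definition EVRP (V : algebra -> Prop) : Prop :=
  forall (xs : seq nat) (y : nat) (gamma : seq eqn),
    ~ List.In y xs ->
    eqns_vars_in (fun m => List.In m (y :: xs)) gamma ->
    exists pi : form void,
      (pi = fbot \/ exists E, eqns_vars_in (fun m => List.In m xs) E /\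
                              pi = conj_eqs E) /\
      Vmodels V (FImp pi (conj_eqs gamma)) /\
      forall phi : seq eqn, eqns_vars_in (fun m => List.In m xs) phi ->
        Vmodels V (FImp (conj_eqs phi) (conj_eqs gamma)) ->
        Vmodels V (FImp (conj_eqs phi) pi).
End Bot.

End FOL.

(* Let [Ts] be the theory of the existentially closed members of [V]: those in
   which every primitive formula [exists y, gam /\ ~ dl] with parameters that is
   realized in some extension in [V] is already realized.  Every member of [V]
   embeds in an existentially closed one (the union of a chain of one-step
   extensions obtained by amalgamating realizations), so [Ts] and [Th(V)] have
   the same universal consequences.  The heart of the proof is that [Ts]
   eliminates quantifiers.  In an existentially closed algebra the primitive
   formula is equivalent to [theta /\ ~ pi_d /\ ...], where [theta] is a finite
   axiomatization (by coherence) of the equations on the parameters implied by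
   [gam], and [pi_d] is, by the equational variable restriction property, the
   weakest conjunction of equations on the parameters implying that [d] lies in
   the congruence generated by [gam] (an equational condition thanks to EDPC).
   When that formula holds, the algebra presented by [gam] over the subalgebra
   generated by the parameters contains this subalgebra and keeps every [d]
   false, so amalgamation yields a witness.  Quantifier elimination gives model
   completeness, and, once the constants of [M] are abstracted into variables,
   shows that [Ts] together with the diagram of [M] decides every sentence, since
   quantifier-free formulas are decided by the diagram. *)

From Pilot Require Import Defs.
From mathcomp Require Import all_boot.
From Stdlib Require Import ClassicalEpsilon FunctionalExtensionality PropExtensionality.
From Stdlib Require Import ProofIrrelevance.
From Stdlib Require List Eqdep_dec PeanoNat.

Set Implicit Arguments.
Unset Strict Implicit.
Unset Printing Implicit Defensive.

Lemma In_mem (T : eqType) (x : T) (s : seq T) : List.In x s <-> x \in s.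
Proof.
elim: s => [|y s IH] //=; rewrite in_cons; split.
- by case=> [->|/IH ->]; rewrite ?eqxx ?orbT.
- by case/orP=> [/eqP ->|/IH]; [left|right].
Qed.

Section Algebra.
Variable F : Type.
Variable ar : F -> nat.

Local Notation algebra := (Defs.algebra F ar).
Local Notation term := (Defs.term F ar).
Local Notation form := (Defs.form F ar).
Local Notation eqn := (Defs.eqn F ar).
Local Notation Var := (@Defs.Var F ar _).
Local Notation Cst := (@Defs.Cst F ar _).
Local Notation App := (@Defs.App F ar _).
Local Notation FEq := (@Defs.FEq F ar _).
Local Notation FNot := (@Defs.FNot F ar _).
Local Notation FAnd := (@Defs.FAnd F ar _).
Local Notation FOr := (@Defs.FOr F ar _).
Local Notation FImp := (@Defs.FImp F ar _).
Local Notation FAll := (@Defs.FAll F ar _).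
Local Notation FEx := (@Defs.FEx F ar _).
Local Notation ops := (Defs.ops F ar).
Local Notation eval := (Defs.eval F ar _ _).
Local Notation sat := (Defs.sat F ar _ _).
Local Notation upd := (Defs.upd F ar _).
Local Notation hom := (Defs.hom F ar).
Local Notation embedding := (Defs.embedding F ar).
Local Notation toccurs := (Defs.toccurs F ar).
Local Notation ffree := (Defs.ffree F ar).
Local Notation qfree := (Defs.qfree F ar).
Local Notation sentence := (Defs.sentence F ar).
Local Notation tvars_in := (Defs.tvars_in F ar).
Local Notation eqns_vars_in := (Defs.eqns_vars_in F ar).
Local Notation conj_eqs := (Defs.conj_eqs F ar).
Local Notation eqn_holds := (Defs.eqn_holds F ar).
Local Notation congruence := (Defs.congruence F ar).
Local Notation gen := (Defs.gen F ar).
Local Notation subalg := (Defs.subalg F ar).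
Local Notation Vmodels := (Defs.Vmodels F ar).

Lemma upd_eq (A : algebra) (v : nat -> A) n a : upd v n a n = a.
Proof. by rewrite /Defs.upd eqxx. Qed.

Lemma upd_neq (A : algebra) (v : nat -> A) n a m : m <> n -> upd v n a m = v m.
Proof. by move=> Hmn; rewrite /Defs.upd; case: eqP. Qed.

Lemma upd_id (A : algebra) (v : nat -> A) n : upd v n (v n) = v.
Proof. by apply: functional_extensionality => m; rewrite /Defs.upd; case: eqP => [->|]. Qed.

Lemma eq_eval_vars (A : algebra) C (k : C -> A) v w (t : term C) :
  (forall n, toccurs n t -> v n = w n) -> eval k v t = eval k w t.
Proof.
elim: t => [n|x|f args IH] /= Hvw; [exact: Hvw|by []|].
congr (ops A f); apply: functional_extensionality => i.
by apply: IH => n Hn; apply: Hvw; exists i.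
Qed.

Lemma eq_eval_consts (A : algebra) C (k k' : C -> A) v (t : term C) :
  k =1 k' -> eval k v t = eval k' v t.
Proof.
move=> Hk; elim: t => [n|x|f args IH] //=.
by congr (ops A f); apply: functional_extensionality => i.
Qed.

Lemma eval_void (A : algebra) (k k' : void -> A) v (t : term void) :
  eval k v t = eval k' v t.
Proof. by apply: eq_eval_consts; case. Qed.

Lemma eq_sat_free (A : algebra) C (k : C -> A) (p : form C) v w :
  (forall n, ffree n p -> v n = w n) -> (sat k v p <-> sat k w p).
Proof.
have upd_agree n (a : A) (v' w' : nat -> A) (q : form C) :
    (forall m, ffree m (FAll n q) -> v' m = w' m) ->
    forall m, ffree m q -> upd v' n a m = upd w' n a m.
  move=> Hvw m Hm; rewrite /Defs.upd; case: eqP => // Hmn.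
  by apply: Hvw; split=> // Hnm; apply: Hmn.
elim: p v w => [t1 t2|q IH|q IHq r IHr|q IHq r IHr|q IHq r IHr|n q IH|n q IH] v w Hvw /=.
- by rewrite (@eq_eval_vars _ _ _ v w t1) ?(@eq_eval_vars _ _ _ v w t2) // => m Hm;
    apply: Hvw; [right|left].
- by rewrite (IH v w Hvw).
- by rewrite (IHq v w) ?(IHr v w) // => m Hm; apply: Hvw; [right|left].
- by rewrite (IHq v w) ?(IHr v w) // => m Hm; apply: Hvw; [right|left].
- by rewrite (IHq v w) ?(IHr v w) // => m Hm; apply: Hvw; [right|left].
- have Hu a := upd_agree n a v w q Hvw.
  by split=> K a; apply/(IH _ _ (Hu a)).
- have Hu a := upd_agree n a v w q Hvw.
  by split=> -[a K]; exists a; apply/(IH _ _ (Hu a)).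
Qed.

Lemma sentence_sat (A : algebra) C (k : C -> A) (p : form C) v w :
  sentence p -> sat k v p -> sat k w p.
Proof.
move=> Hp; have Hvw : forall n, ffree n p -> v n = w n by move=> n /Hp.
exact: (proj1 (eq_sat_free k Hvw)).
Qed.

Lemma eq_sat_consts (A : algebra) C (k k' : C -> A) (p : form C) v :
  k =1 k' -> (sat k v p <-> sat k' v p).
Proof.
move=> Hk; elim: p v => [t1 t2|q IH|q IHq r IHr|q IHq r IHr|q IHq r IHr|n q IH|n q IH] v /=.
- by rewrite !(eq_eval_consts _ _ Hk).
- by rewrite IH.
- by rewrite IHq IHr.
- by rewrite IHq IHr.
- by rewrite IHq IHr.
- by split=> K a; apply/IH.
- by split=> -[a K]; exists a; apply/IH.
Qed.

Lemma sat_void (A : algebra) (k k' : void -> A) (p : form void) v :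
  sat k v p -> sat k' v p.
Proof. by apply: (proj1 (eq_sat_consts _ _ _)); case. Qed.

Lemma hom_eval (A B : algebra) (h : A -> B) C (k : C -> A) (k' : C -> B) v (t : term C) :
  hom h -> (forall x, h (k x) = k' x) -> h (eval k v t) = eval k' (fun n => h (v n)) t.
Proof.
move=> Hh Hk; elim: t => [n|x|f args IH] //=.
by rewrite Hh; congr (ops B f); apply: functional_extensionality.
Qed.

Lemma hom_eval_void (A B : algebra) (h : A -> B) v (t : term void) :
  hom h -> h (eval (novoid A) v t) = eval (novoid B) (fun n => h (v n)) t.
Proof. by move=> Hh; apply: hom_eval => //; case. Qed.

Lemma embedding_sat_qfree (A B : algebra) (h : A -> B) C (k : C -> A) (k' : C -> B) v
    (p : form C) :
  embedding h -> (forall x, h (k x) = k' x) -> qfree p ->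
  (sat k v p <-> sat k' (fun n => h (v n)) p).
Proof.
case=> Hh Hinj Hk; elim: p => [t1 t2|q IH|q IHq r IHr|q IHq r IHr|q IHq r IHr|n q IH|n q IH] //=.
- by rewrite -!(hom_eval _ _ Hh Hk); split=> [->|/Hinj].
- by move=> /IH ->.
- by case=> /IHq -> /IHr ->.
- by case=> /IHq -> /IHr ->.
- by case=> /IHq -> /IHr ->.
Qed.

Lemma embedding_comp (A B D : algebra) (f : A -> B) (g : B -> D) :
  embedding f -> embedding g -> embedding (fun a => g (f a)).
Proof.
case=> Hf If [Hg Ig]; split; last by move=> x y /Ig /If.
by move=> f0 args; rewrite Hf Hg.
Qed.

Lemma embedding_id (A : algebra) : embedding (fun a : A => a).
Proof. by split. Qed.

Lemma tmap_id C (t : term C) : tmap F ar id t = t.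
Proof. by elim: t => [n|x|f args IH] //=; congr (App f); apply: functional_extensionality. Qed.

Lemma tmap_eval (A : algebra) C D (g : C -> D) (k : D -> A) v (t : term C) :
  eval k v (tmap F ar g t) = eval (fun x => k (g x)) v t.
Proof.
elim: t => //= f args IH.
by congr (ops A f); apply: functional_extensionality.
Qed.

Lemma fmap_sat (A : algebra) C D (g : C -> D) (k : D -> A) (p : form C) v :
  sat k v (fmap F ar g p) <-> sat (fun x => k (g x)) v p.
Proof.
elim: p v => [t1 t2|q IH|q IHq r IHr|q IHq r IHr|q IHq r IHr|n q IH|n q IH] v /=.
- by rewrite !tmap_eval.
- by rewrite IH.
- by rewrite IHq IHr.
- by rewrite IHq IHr.
- by rewrite IHq IHr.
- by split=> K a; apply/IH.
- by split=> -[a K]; exists a; apply/IH.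
Qed.

Definition holds_all (A : algebra) (w : nat -> A) (E : seq eqn) : Prop :=
  forall e, List.In e E -> eqn_holds w e.

Lemma sat_conj_eqs (A : algebra) (k : void -> A) v (E : seq eqn) :
  sat k v (conj_eqs E) <-> holds_all v E.
Proof.
rewrite /holds_all; elim: E => [|e E IH] /=; first by split.
rewrite !tmap_id IH /Defs.eqn_holds; split.
- by case=> He HE e' [<-|He']; [rewrite !(eval_void _ k)|apply: HE].
- move=> HE; split; last by move=> e' He'; apply: HE; right.
  by rewrite !(eval_void _ (novoid A)); apply: HE; left.
Qed.

Lemma conj_eqs_qfree (E : seq eqn) : qfree (conj_eqs E).
Proof. by elim: E => //= e E ->. Qed.

Lemma eq_holds_all (A : algebra) (w w' : nat -> A) (X : nat -> Prop) E :
  eqns_vars_in X E -> (forall n, X n -> w n = w' n) -> holds_all w E -> holds_all w' E.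
Proof.
move=> HE Hw Hwt e He; have [H1 H2] := HE e He.
rewrite /Defs.eqn_holds -(eq_eval_vars _ (v:=w) (t:=e.1)); last by move=> n /H1 /Hw.
rewrite -(eq_eval_vars _ (v:=w) (t:=e.2)); last by move=> n /H2 /Hw.
exact: Hwt.
Qed.

(** * Term algebras, generated congruences and quotients *)

Definition term_alg (X : Type) : algebra := @Defs.Algebra F ar (term X) (fun f args => App f args).

Lemma eval_hom (A : algebra) X (k : X -> A) v : hom (fun t : term_alg X => eval k v t).
Proof. by []. Qed.

Definition tsubst X (sg : nat -> term X) (t : term void) : term X :=
  eval (novoid (term_alg X)) sg t.

Lemma eval_tsubst (A : algebra) X (k : X -> A) w (sg : nat -> term X) (t : term void) :
  eval k w (tsubst sg t) = eval (novoid A) (fun n => eval k w (sg n)) t.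
Proof. exact: hom_eval_void (eval_hom k w). Qed.

Lemma tsubst_Var (t : term void) : tsubst (fun n => Var n) t = t.
Proof. by elim: t => [n|[]|f args IH] //=; congr (App f); apply: functional_extensionality. Qed.

Lemma toccurs_tsubst X (sg : nat -> term X) t n :
  toccurs n (tsubst sg t) -> exists2 m, toccurs m t & toccurs n (sg m).
Proof.
elim: t => [m|[]|f args IH] /=; first by exists m.
by case=> i /IH [m Hm Hn]; exists m => //; exists i.
Qed.

Inductive cgen (A : algebra) (G : A -> A -> Prop) : A -> A -> Prop :=
| cgen_base a b : G a b -> cgen G a b
| cgen_refl a : cgen G a a
| cgen_sym a b : cgen G a b -> cgen G b a
| cgen_trans a b d : cgen G a b -> cgen G b d -> cgen G a d
| cgen_app f (x y : 'I_(ar f) -> A) :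
    (forall i, cgen G (x i) (y i)) -> cgen G (ops A f x) (ops A f y).

Lemma cgen_congruence (A : algebra) (G : A -> A -> Prop) : congruence (cgen G).
Proof.
split; first exact: cgen_refl; split; first exact: cgen_sym.
by split; [exact: cgen_trans|exact: cgen_app].
Qed.

Lemma cgen_min (A : algebra) (G th : A -> A -> Prop) :
  congruence th -> (forall a b, G a b -> th a b) -> forall a b, cgen G a b -> th a b.
Proof.
case=> Hr [Hs [Ht Hc]] HG a b; elim=> //.
- by move=> ? ? _; apply: Hs.
- by move=> ? ? ? _ H1 _ H2; apply: Ht H2.
- by move=> f x y _ H; apply: Hc.
Qed.

Lemma cgen_mono (A : algebra) (G G' : A -> A -> Prop) :
  (forall a b, G a b -> G' a b) -> forall a b, cgen G a b -> cgen G' a b.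
Proof. by move=> HG; apply: cgen_min; [exact: cgen_congruence|move=> a b /HG /cgen_base]. Qed.

Lemma in_CgP (A : algebra) (b1 b2 a1 a2 : A) :
  in_Cg F ar b1 b2 a1 a2 <-> cgen (fun x y => x = b1 /\ y = b2) a1 a2.
Proof.
split; first by apply; [exact: cgen_congruence|exact: cgen_base].
by move=> H th Hth Hb; apply: (cgen_min Hth) H => x y [-> ->].
Qed.

Lemma kernel_congruence (A B : algebra) (h : A -> B) :
  hom h -> congruence (fun x y => h x = h y).
Proof.
move=> Hh; split=> //; split; first by move=> ? ? ->.
split; first by move=> ? ? ? -> ->.
by move=> f a b H; rewrite !Hh; congr (ops B f); apply: functional_extensionality.
Qed.

Lemma cgen_kernel (A B : algebra) (h : A -> B) (G : A -> A -> Prop) :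
  hom h -> (forall a b, G a b -> h a = h b) -> forall a b, cgen G a b -> h a = h b.
Proof. by move=> Hh; apply: cgen_min; apply: kernel_congruence. Qed.

Lemma cgen_eq (A : algebra) (G : A -> A -> Prop) :
  (forall a b, G a b -> a = b) -> forall a b, cgen G a b -> a = b.
Proof. exact: (@cgen_kernel A A id). Qed.

Lemma cgen_compact (A : algebra) (G1 G2 : A -> A -> Prop) a b :
  cgen (fun x y => G1 x y \/ G2 x y) a b ->
  exists L : seq (A * A), (forall p, List.In p L -> G2 p.1 p.2) /\
     cgen (fun x y => G1 x y \/ List.In (x, y) L) a b.
Proof.
have weaken (L L' : seq (A * A)) x y : (forall p, List.In p L -> List.In p L') ->
    cgen (fun x y => G1 x y \/ List.In (x, y) L) x y ->
    cgen (fun x y => G1 x y \/ List.In (x, y) L') x y.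
  by move=> HL; apply: cgen_mono => u w [K|/HL K]; [left|right].
elim.
- move=> x y [H|H]; first by exists [::]; split=> //; apply: cgen_base; left.
  by exists [:: (x, y)]; split; [move=> p [<-|]|apply: cgen_base; right; left].
- by move=> x; exists [::]; split=> //; apply: cgen_refl.
- by move=> x y _ [L [HL H]]; exists L; split=> //; apply: cgen_sym.
- move=> x y z _ [L1 [HL1 H1]] _ [L2 [HL2 H2]]; exists (L1 ++ L2); split.
  + by move=> p /List.in_app_iff [/HL1|/HL2].
  + apply: (@cgen_trans _ _ x y z).
    * by apply: weaken H1 => p Hp; apply: List.in_or_app; left.
    * by apply: weaken H2 => p Hp; apply: List.in_or_app; right.
- move=> f x y _ IH.
  have [Lf HLf] := choice _ IH.
  exists (List.flat_map Lf (enum 'I_(ar f))); split.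
  + by move=> p /List.in_flat_map [i [_ /(proj1 (HLf i))]].
  + apply: cgen_app => i; apply: weaken (proj2 (HLf i)) => p Hp.
    by apply/List.in_flat_map; exists i; split=> //; apply/In_mem; rewrite mem_enum.
Qed.

Section Quotient.
Variable A : algebra.
Variable th : A -> A -> Prop.
Hypothesis th_congr : congruence th.

Definition quot_car := {P : A -> Prop | exists a, P = th a}.
Definition quot_pi (a : A) : quot_car := exist _ (th a) (ex_intro _ a erefl).
Definition quot_rep (x : quot_car) : A :=
  proj1_sig (constructive_indefinite_description _ (proj2_sig x)).

Lemma quot_repK x : quot_pi (quot_rep x) = x.
Proof.
case: x => P HP; rewrite /quot_pi /quot_rep /=.
case: (constructive_indefinite_description _ HP) => a /= Ha.
by subst P; congr exist; apply: proof_irrelevance.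
Qed.

Lemma quot_pi_surj (x : quot_car) : exists a, x = quot_pi a.
Proof. by exists (quot_rep x); rewrite quot_repK. Qed.

Lemma quot_piP a b : quot_pi a = quot_pi b <-> th a b.
Proof.
case: th_congr => Hr [Hs [Ht _]]; split.
- by case=> E; move: (Hr b); rewrite -E.
- move=> Hab; have E : th a = th b.
    apply: functional_extensionality => z; apply: propositional_extensionality.
    by split; [apply: Ht (Hs _ _ Hab)|apply: Ht Hab].
  rewrite /quot_pi; move: (ex_intro _ a erefl : exists a0, th a = th a0)
    (ex_intro _ b erefl : exists a0, th b = th a0).
  by rewrite E => p1 p2; congr exist; apply: proof_irrelevance.
Qed.

Lemma quot_rep_rel a : th (quot_rep (quot_pi a)) a.
Proof. by apply/quot_piP; rewrite quot_repK. Qed.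

Definition quot_alg : algebra :=
  @Defs.Algebra F ar quot_car (fun f args => quot_pi (ops A f (fun i => quot_rep (args i)))).

Lemma quot_pi_hom : hom (quot_pi : A -> quot_alg).
Proof.
move=> f args /=; apply/quot_piP; case: th_congr => _ [Hs [_ Hc]].
by apply: Hc => i; apply: Hs; apply: quot_rep_rel.
Qed.

Section Lift.
Variable B : algebra.
Variable g : A -> B.
Hypothesis g_hom : hom g.
Hypothesis g_compat : forall a b, th a b -> g a = g b.

Definition quot_lift (x : quot_alg) : B := g (quot_rep x).

Lemma quot_lift_pi a : quot_lift (quot_pi a) = g a.
Proof. exact: g_compat (quot_rep_rel a). Qed.

Lemma quot_lift_hom : hom quot_lift.
Proof. by move=> f args; rewrite /quot_lift /= (g_compat (quot_rep_rel _)) g_hom. Qed.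

End Lift.
End Quotient.

Lemma cgen_quot (B : algebra) (G : B -> B -> Prop) (a1 a2 x y : B) :
  let pi := quot_pi (cgen G) in
  cgen (fun X Y : quot_alg (cgen G) => X = pi a1 /\ Y = pi a2) (pi x) (pi y)
  <-> cgen (fun u w => G u w \/ (u = a1 /\ w = a2)) x y.
Proof.
move=> pi; have Hc := cgen_congruence G.
set G' := fun u w => G u w \/ (u = a1 /\ w = a2).
have sub u w : cgen G u w -> cgen G' u w by apply: cgen_mono => ? ? K; left.
have rep_rel a : cgen G' (quot_rep (pi a)) a by apply: sub; apply: quot_rep_rel.
split.
- pose th (X Y : quot_alg (cgen G)) := cgen G' (quot_rep X) (quot_rep Y).
  have Hth : congruence th.
    split; first by move=> X; apply: cgen_refl.
    split; first by move=> X Y; apply: cgen_sym.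
    split; first by move=> X Y Z; apply: cgen_trans.
    move=> f X Y K; rewrite /th /=.
    apply: cgen_trans (rep_rel _) _; apply: cgen_sym; apply: cgen_trans (rep_rel _) _.
    by apply: cgen_app => i; apply: cgen_sym; apply: K.
  move=> /(cgen_min Hth) Hxy.
  apply: cgen_trans (cgen_sym (rep_rel x)) _; apply: cgen_trans (rep_rel y).
  apply: Hxy => X Y [-> ->]; apply: cgen_trans (rep_rel _) _.
  by apply: cgen_sym; apply: cgen_trans (rep_rel _) _; apply: cgen_sym; apply: cgen_base; right.
- pose th u w := cgen (fun X Y : quot_alg (cgen G) => X = pi a1 /\ Y = pi a2) (pi u) (pi w).
  have Hth : congruence th.
    split; first by move=> u; apply: cgen_refl.
    split; first by move=> u w; apply: cgen_sym.
    split; first by move=> u w z; apply: cgen_trans.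
    by move=> f u w K; rewrite /th /pi !(quot_pi_hom Hc); apply: cgen_app.
  apply: (cgen_min Hth) => u w [K|[-> ->]]; last exact: cgen_base.
  by rewrite /th /pi (proj2 (quot_piP Hc u w) (cgen_base K)); apply: cgen_refl.
Qed.

(** * Variables, universal closures and abstraction of constants *)

Fixpoint tvars C (t : term C) : seq nat :=
  match t with
  | Defs.Var n => [:: n]
  | Defs.Cst _ => [::]
  | Defs.App f args => flatten [seq tvars (args i) | i <- enum 'I_(ar f)]
  end.

Lemma tvarsP C (t : term C) n : toccurs n t <-> n \in tvars t.
Proof.
elim: t => [m|x|f args IH] /=; first by rewrite inE; split=> [->|/eqP ->].
- by [].
- split.
  + case=> i /IH Hi; apply/flattenP; exists (tvars (args i)) => //.
    by apply/mapP; exists i => //; rewrite mem_enum.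
  + by case/flattenP=> s /mapP [i _ ->] /IH Hi; exists i.
Qed.

Definition eqns_vars (E : seq eqn) : seq nat := flatten [seq tvars e.1 ++ tvars e.2 | e <- E].

Lemma eqns_vars_in_vars (E : seq eqn) : eqns_vars_in (fun n => n \in eqns_vars E) E.
Proof.
move=> e He; suff K n : toccurs n e.1 \/ toccurs n e.2 -> n \in eqns_vars E.
  by split=> n Hn; apply: K; [left|right].
move=> Hn; elim: E He => //= e' E IH [Ee|He]; rewrite /eqns_vars /= mem_cat.
- by subst e'; rewrite mem_cat; case: Hn => /tvarsP ->; rewrite ?orbT.
- by rewrite IH ?orbT.
Qed.

Lemma eqns_vars_in_mono (X Y : nat -> Prop) (E : seq eqn) :
  (forall n, X n -> Y n) -> eqns_vars_in X E -> eqns_vars_in Y E.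
Proof. by move=> HXY H e /H [H1 H2]; split=> n Hn; apply: HXY; [apply: H1|apply: H2]. Qed.

Fixpoint form_vars C (p : form C) : seq nat :=
  match p with
  | Defs.FEq t1 t2 => tvars t1 ++ tvars t2
  | Defs.FNot q => form_vars q
  | Defs.FAnd q r | Defs.FOr q r | Defs.FImp q r => form_vars q ++ form_vars r
  | Defs.FAll n q | Defs.FEx n q => n :: form_vars q
  end.

Lemma ffree_form_vars C (p : form C) n : ffree n p -> n \in form_vars p.
Proof.
elim: p => [t1 t2|q IH|q IHq r IHr|q IHq r IHr|q IHq r IHr|m q IH|m q IH] /=.
- by case=> /tvarsP H; rewrite mem_cat H ?orbT.
- exact: IH.
- by case=> [/IHq|/IHr] H; rewrite mem_cat H ?orbT.
- by case=> [/IHq|/IHr] H; rewrite mem_cat H ?orbT.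
- by case=> [/IHq|/IHr] H; rewrite mem_cat H ?orbT.
- by case=> _ /IH H; rewrite inE H orbT.
- by case=> _ /IH H; rewrite inE H orbT.
Qed.

Definition forall_vars C (l : seq nat) (p : form C) : form C := foldr (fun n q => FAll n q) p l.

Definition univ_closure C (p : form C) : form C := forall_vars (form_vars p) p.

Lemma ffree_forall_vars C (p : form C) l n :
  ffree n (forall_vars l p) -> ffree n p /\ n \notin l.
Proof.
elim: l => [|m l IH] //=.
case=> Hmn /IH [H1 H2]; split=> //; rewrite inE negb_or H2 andbT.
by apply/eqP => E; apply: Hmn.
Qed.

Lemma univ_closure_sentence C (p : form C) : sentence (univ_closure p).
Proof. by move=> n /ffree_forall_vars [/ffree_form_vars ->]. Qed.

Lemma sat_forall_vars (A : algebra) C (k : C -> A) (p : form C) l v :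
  sat k v (forall_vars l p) ->
  forall w, (forall n, ffree n p -> n \notin l -> w n = v n) -> sat k w p.
Proof.
elim: l v => [|m l IH] v /= Hv w Hw.
- have Hvw n : ffree n p -> v n = w n by move=> Hn; apply/esym/Hw.
  exact: (proj1 (eq_sat_free k Hvw)).
- apply: (IH _ (Hv (w m))) => n Hn Hnl; rewrite /Defs.upd; case: eqP => [->//|Hnm].
  by apply: Hw => //; rewrite inE negb_or Hnl andbT; apply/eqP.
Qed.

Lemma sat_univ_closure (A : algebra) C (k : C -> A) (p : form C) v :
  sat k v (univ_closure p) <-> forall w, sat k w p.
Proof.
split=> [Hv w|Hp]; first by apply: (sat_forall_vars Hv) => n /ffree_form_vars ->.
by rewrite /univ_closure; elim: (form_vars p) v => [|m l IH] //= v a.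
Qed.

Fixpoint const_at C (t : term C) (q : seq nat) {struct t} : option C :=
  match q, t with
  | [::], Defs.Cst m => Some m
  | i :: q', Defs.App f args =>
      if (insub i : option 'I_(ar f)) is Some j then const_at (args j) q' else None
  | _, _ => None
  end.

Fixpoint abstract_term C (e : seq nat -> nat) (t : term C) {struct t} : term void :=
  match t with
  | Defs.Var n => Var n
  | Defs.Cst _ => Var (e [::])
  | Defs.App f args => App f (fun j => abstract_term (fun q => e (val j :: q)) (args j))
  end.

Lemma eval_abstract_term (A : algebra) C (k : C -> A) (w : nat -> A) (t : term C) e :
  (forall q m, const_at t q = Some m -> w (e q) = k m) ->
  eval k w t = eval (novoid A) w (abstract_term e t).
Proof.
elim: t e => [n|m|f args IH] e He //=; first by rewrite (He [::] m).
congr (ops A f); apply: functional_extensionality => j; apply: IH => q m Hq.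
by apply: (He (val j :: q)); rewrite /= valK.
Qed.

Fixpoint const_at_form C (p : form C) (q : seq nat) {struct p} : option C :=
  match p, q with
  | Defs.FEq t1 t2, 0 :: q' => const_at t1 q'
  | Defs.FEq t1 t2, 1 :: q' => const_at t2 q'
  | Defs.FNot p', _ => const_at_form p' q
  | Defs.FAnd p1 p2, 0 :: q' | Defs.FOr p1 p2, 0 :: q'
  | Defs.FImp p1 p2, 0 :: q' => const_at_form p1 q'
  | Defs.FAnd p1 p2, 1 :: q' | Defs.FOr p1 p2, 1 :: q'
  | Defs.FImp p1 p2, 1 :: q' => const_at_form p2 q'
  | Defs.FAll _ p', _ | Defs.FEx _ p', _ => const_at_form p' q
  | _, _ => None
  end.

Fixpoint abstract_form C (e : seq nat -> nat) (p : form C) {struct p} : form void :=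
  let e0 q := e (0 :: q) in let e1 q := e (1 :: q) in
  match p with
  | Defs.FEq t1 t2 => FEq (abstract_term e0 t1) (abstract_term e1 t2)
  | Defs.FNot p' => FNot (abstract_form e p')
  | Defs.FAnd p1 p2 => FAnd (abstract_form e0 p1) (abstract_form e1 p2)
  | Defs.FOr p1 p2 => FOr (abstract_form e0 p1) (abstract_form e1 p2)
  | Defs.FImp p1 p2 => FImp (abstract_form e0 p1) (abstract_form e1 p2)
  | Defs.FAll n p' => FAll n (abstract_form e p')
  | Defs.FEx n p' => FEx n (abstract_form e p')
  end.

(* Constants are replaced by variables [e q] indexed by their positions [q]; these
   must avoid the variables of [p], bound ones included. *)
Lemma sat_abstract_form (A : algebra) C (k : C -> A) (p : form C) e w :
  (forall q, e q \notin form_vars p) ->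
  (forall q m, const_at_form p q = Some m -> w (e q) = k m) ->
  (sat k w p <-> sat (novoid A) w (abstract_form e p)).
Proof.
elim: p e w => [t1 t2|p IH|p1 IH1 p2 IH2|p1 IH1 p2 IH2|p1 IH1 p2 IH2|n p IH|n p IH] e w He H /=;
  try (have He1 q : e (0 :: q) \notin form_vars p1
         by move: (He (0 :: q)); rewrite mem_cat negb_or => /andP []);
  try (have He2 q : e (1 :: q) \notin form_vars p2
         by move: (He (1 :: q)); rewrite mem_cat negb_or => /andP []);
  try (have Hn q : e q != n by move: (He q); rewrite inE negb_or => /andP []);
  try (have He' q : e q \notin form_vars p by move: (He q); rewrite inE negb_or => /andP []).
- by rewrite -(eval_abstract_term (k:=k) (t:=t1)) -?(eval_abstract_term (k:=k) (t:=t2))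
    // => q m Hq; apply: H.
- by rewrite (IH e w).
- by rewrite (IH1 _ w He1) ?(IH2 _ w He2) // => q m Hq; apply: H.
- by rewrite (IH1 _ w He1) ?(IH2 _ w He2) // => q m Hq; apply: H.
- by rewrite (IH1 _ w He1) ?(IH2 _ w He2) // => q m Hq; apply: H.
- have Hu a q m : const_at_form p q = Some m -> upd w n a (e q) = k m.
    by move=> Hq; rewrite upd_neq; [apply: H|apply/eqP].
  by split=> K a; [rewrite -(IH e _ He' (Hu a))|rewrite (IH e _ He' (Hu a))].
- have Hu a q m : const_at_form p q = Some m -> upd w n a (e q) = k m.
    by move=> Hq; rewrite upd_neq; [apply: H|apply/eqP].
  by split=> -[a K]; exists a; [rewrite -(IH e _ He' (Hu a))|rewrite (IH e _ He' (Hu a))].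
Qed.

(** * Presentations in a variety *)

Section Variety.
Variable V : algebra -> Prop.
Variable Eqs : eqn -> Prop.
Hypothesis V_def : forall A, V A <-> (forall p, Eqs p -> forall v : nat -> A, eqn_holds v p).

Lemma variety_eqn (A : algebra) p (v : nat -> A) : V A -> Eqs p -> eqn_holds v p.
Proof. by move/V_def=> H /H. Qed.

Lemma variety_sub (A B : algebra) (h : A -> B) : embedding h -> V B -> V A.
Proof.
case=> Hh Hinj HB; apply/V_def => p Hp v; apply: Hinj; rewrite /Defs.eqn_holds.
by rewrite !hom_eval_void //; apply: variety_eqn.
Qed.

Lemma subalg_val_embedding (A : algebra) (S : A -> Prop) :
  embedding (fun x : subalg S => proj1_sig x).
Proof.
split=> // -[x Hx] [y Hy] /= Exy.
by subst y; congr exist; apply: proof_irrelevance.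
Qed.

Lemma variety_subalg (A : algebra) (S : A -> Prop) : V A -> V (subalg S).
Proof. exact/variety_sub/subalg_val_embedding. Qed.

Lemma quot_in_variety (A : algebra) (th : A -> A -> Prop) (th_congr : congruence th) :
  (forall p (w : nat -> A), Eqs p -> th (eval (novoid A) w p.1) (eval (novoid A) w p.2)) ->
  V (quot_alg th).
Proof.
move=> Hth; apply/V_def => p Hp v.
have -> : v = fun n => quot_pi th (quot_rep (v n)).
  by apply: functional_extensionality => n; rewrite quot_repK.
rewrite /Defs.eqn_holds -!(hom_eval_void _ _ (quot_pi_hom th_congr)).
by apply/(quot_piP th_congr); apply: Hth.
Qed.

Lemma variety_quot (A : algebra) (th : A -> A -> Prop) (th_congr : congruence th) :
  V A -> V (quot_alg th).
Proof.
move=> HA; apply: (quot_in_variety th_congr) => p w Hp.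
by rewrite (variety_eqn w HA Hp); case: th_congr.
Qed.

Definition identity_inst X (p q : term X) : Prop :=
  exists e sg, Eqs e /\ p = tsubst sg e.1 /\ q = tsubst sg e.2.

Section Presentation.
Variable X : Type.
Variable G : term X -> term X -> Prop.

Definition pres_rel (p q : term_alg X) : Prop := identity_inst p q \/ G p q.
Definition pres : algebra := quot_alg (cgen pres_rel).
Definition pres_cls (t : term X) : pres := quot_pi (cgen pres_rel) t.

Lemma pres_in_variety : V pres.
Proof.
apply: (quot_in_variety (cgen_congruence _)) => e w He.
by apply: cgen_base; left; exists e, w.
Qed.

Lemma pres_cls_hom : hom (pres_cls : term_alg X -> pres).
Proof. exact: (quot_pi_hom (cgen_congruence pres_rel)). Qed.

Lemma pres_clsP p q : pres_cls p = pres_cls q <-> cgen pres_rel p q.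
Proof. exact: (quot_piP (cgen_congruence pres_rel)). Qed.

Lemma pres_cls_rel p q : G p q -> pres_cls p = pres_cls q.
Proof. by move=> H; apply/pres_clsP; apply: cgen_base; right. Qed.

Lemma eval_pres_cls (t : term void) (sg : nat -> term X) :
  eval (novoid pres) (fun n => pres_cls (sg n)) t = pres_cls (tsubst sg t).
Proof. by rewrite (hom_eval_void _ _ pres_cls_hom). Qed.

Lemma pres_cls_surj (x : pres) : exists t, x = pres_cls t.
Proof. exact: (@quot_pi_surj _ (cgen pres_rel)). Qed.

Lemma pres_lift (B : algebra) (k : X -> B) (w : nat -> B) : V B ->
  (forall p q, G p q -> eval k w p = eval k w q) ->
  exists h : pres -> B, hom h /\ forall t, h (pres_cls t) = eval k w t.
Proof.
move=> HB HG.
have Hk : forall a b, cgen pres_rel a b -> eval k w a = eval k w b.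
  apply: cgen_kernel; first exact: eval_hom.
  move=> a b [[e [sg [He [-> ->]]]]|/HG //].
  by rewrite !eval_tsubst; apply: (variety_eqn _ HB He).
exists (quot_lift (fun t : term_alg X => eval k w t)); split.
- exact: (quot_lift_hom (cgen_congruence _)).
- by move=> t; apply: (quot_lift_pi (cgen_congruence _) Hk).
Qed.

End Presentation.

Lemma pres_cls_compact X (G1 G2 : term X -> term X -> Prop) s t :
  pres_cls (fun p q => G1 p q \/ G2 p q) s = pres_cls (fun p q => G1 p q \/ G2 p q) t ->
  exists L : seq (term X * term X), (forall p, List.In p L -> G2 p.1 p.2) /\
    forall (B : algebra) (k : X -> B) (w : nat -> B), V B ->
      (forall p q, G1 p q -> eval k w p = eval k w q) ->
      (forall p, List.In p L -> eval k w p.1 = eval k w p.2) -> eval k w s = eval k w t.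
Proof.
move=> /pres_clsP Hst.
have /cgen_compact [L [HL HcL]] :
    @cgen (term_alg X) (fun p q => (identity_inst p q \/ G1 p q) \/ G2 p q) s t.
  by apply: cgen_mono Hst => p q [K|[K|K]]; [left; left|left; right|right].
exists L; split=> // B k w HB HG1 HLw.
apply: (cgen_kernel (eval_hom k w) _ HcL) => p q [[[e [sg [He [-> ->]]]]|/HG1 //]|/HLw //].
by rewrite !eval_tsubst; apply: (variety_eqn _ HB He).
Qed.

(** * Principal congruence formulas *)

Lemma cgen_eqns_of_implication (B : algebra) (u : nat -> B) (L M : seq eqn) (s t : term void) :
  V B ->
  (forall (D : algebra) (u' : nat -> D), V D -> holds_all u' L -> holds_all u' M ->
     eval (novoid D) u' s = eval (novoid D) u' t) ->
  holds_all u L ->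
  cgen (fun x y => exists2 e, List.In e M & x = eval (novoid B) u e.1 /\ y = eval (novoid B) u e.2)
    (eval (novoid B) u s) (eval (novoid B) u t).
Proof.
set G := fun x y => _; move=> HB Himp HL.
have Hc := cgen_congruence G.
have pi_eval z : eval (novoid (quot_alg (cgen G))) (fun n => quot_pi (cgen G) (u n)) z =
    quot_pi (cgen G) (eval (novoid B) u z).
  by rewrite (hom_eval_void _ _ (quot_pi_hom Hc)).
apply/(quot_piP Hc); rewrite -!pi_eval; apply: (Himp (quot_alg (cgen G))) => [|e He|e He].
- exact: variety_quot.
- by rewrite /Defs.eqn_holds !pi_eval (HL e He).
- by rewrite /Defs.eqn_holds !pi_eval; apply/(quot_piP Hc)/cgen_base; exists e.
Qed.

Section PrincipalCongruences.
Variable alpha : seq eqn.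
Hypothesis alpha_vars : eqns_vars_in (fun n => n < 4) alpha.
Hypothesis alpha_Cg : forall A, V A -> forall a1 a2 b1 b2 : A,
  in_Cg F ar b1 b2 a1 a2 <->
  sat (novoid A) (fun n => nth a1 [:: a1; a2; b1; b2] n) (conj_eqs alpha).

Definition alpha_at (s t l r : term void) : seq eqn :=
  let sg n := nth s [:: s; t; l; r] n in [seq (tsubst sg e.1, tsubst sg e.2) | e <- alpha].

(* [(s, t)] lies in the congruence generated by [(l, r) :: L] iff [(s, t)] lies in
   the congruence generated by [L] after some pair of [alpha_at s t l r] does;
   iterating the principal formula yields a conjunction of equations. *)
Fixpoint cg_eqs (s t : term void) (L : seq eqn) : seq eqn :=
  if L is (l, r) :: L' then List.flat_map (fun e => cg_eqs e.1 e.2 L') (alpha_at s t l r)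
  else [:: (s, t)].

Definition eqns_rel (B : algebra) (w : nat -> B) (L : seq eqn) : B -> B -> Prop :=
  fun x y => exists2 e, List.In e L & x = eval (novoid B) w e.1 /\ y = eval (novoid B) w e.2.

Lemma holds_cg_eqs (B : algebra) (w : nat -> B) L s t : V B ->
  holds_all w (cg_eqs s t L) <->
  cgen (eqns_rel w L) (eval (novoid B) w s) (eval (novoid B) w t).
Proof.
move=> HB; elim: L s t => [|[l r] L IH] s t /=.
  split=> [Hst|Hst _ [<-|//]]; last by apply: cgen_eq Hst => a b [? []].
  by rewrite (Hst (s, t)); [apply: cgen_refl|left].
set ev := eval (novoid B) w; set Q := quot_alg (cgen (eqns_rel w L)).
have Hc := cgen_congruence (eqns_rel w L); pose pi := quot_pi (cgen (eqns_rel w L)).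
pose u n : Q := nth (pi (ev s)) [:: pi (ev s); pi (ev t); pi (ev l); pi (ev r)] n.
have alpha_eval e : List.In e alpha ->
    forall z, tvars_in (fun n => n < 4) z ->
    eval (novoid Q) u z = pi (ev (tsubst (fun n => nth s [:: s; t; l; r] n) z)).
  move=> He z Hz; rewrite /pi /ev eval_tsubst (hom_eval_void _ _ (quot_pi_hom Hc)).
  by apply: eq_eval_vars => n /Hz; rewrite /u; case: n => [|[|[|[|n]]]].
have -> : holds_all w (List.flat_map (fun e => cg_eqs e.1 e.2 L) (alpha_at s t l r))
    <-> holds_all u alpha.
  split=> [Hw e He|Hu p /List.in_flat_map [e' [/List.in_map_iff [e [<- He]] Hp]]].
  - have [Hv1 Hv2] := alpha_vars He.
    rewrite /Defs.eqn_holds (alpha_eval _ He _ Hv1) (alpha_eval _ He _ Hv2).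
    apply/(quot_piP Hc)/IH => p Hp; apply: Hw; apply/List.in_flat_map.
    by eexists; split; first exact: List.in_map He.
  - have [Hv1 Hv2] := alpha_vars He; move: (Hu e He).
    rewrite /Defs.eqn_holds (alpha_eval _ He _ Hv1) (alpha_eval _ He _ Hv2).
    by move/(quot_piP Hc)/IH; apply.
rewrite -(sat_conj_eqs (novoid _)) /u -alpha_Cg; last exact: variety_quot.
rewrite in_CgP cgen_quot; split=> K; apply: cgen_mono K => a b.
- by case=> [[p Hp E]|[-> ->]]; [exists p => //; right|exists (l, r); [left|]].
- by case=> p [<-|Hp] E; [right|left; exists p].
Qed.

Lemma cg_eqs_eval (B : algebra) (w : nat -> B) L s t : V B ->
  holds_all w L -> holds_all w (cg_eqs s t L) -> eval (novoid B) w s = eval (novoid B) w t.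
Proof. by move=> HB HL /(holds_cg_eqs _ _ _ _ HB); apply: cgen_eq => x y [e /HL He [-> ->]]. Qed.

Lemma cg_eqs_deduction (L M : seq eqn) s t :
  (forall (B : algebra) (u : nat -> B), V B -> holds_all u L -> holds_all u M ->
     eval (novoid B) u s = eval (novoid B) u t) ->
  forall (B : algebra) (u : nat -> B), V B -> holds_all u L -> holds_all u (cg_eqs s t M).
Proof.
move=> Himp B u HB HL; apply/(holds_cg_eqs _ _ _ _ HB).
exact: (cgen_eqns_of_implication HB Himp HL).
Qed.

Lemma cg_eqs_vars (X : nat -> Prop) L s t : eqns_vars_in X L ->
  tvars_in X s -> tvars_in X t -> eqns_vars_in X (cg_eqs s t L).
Proof.
elim: L s t => [|[l r] L IH] s t HL Hs Ht /=; first by move=> p [<-|].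
have [Hl Hr] : tvars_in X l /\ tvars_in X r by apply: (HL (l, r)); left.
have HL' : eqns_vars_in X L by move=> p Hp; apply: HL; right.
move=> p /List.in_flat_map [e' [/List.in_map_iff [e [<- He]] Hp]].
have [Hv1 Hv2] := alpha_vars He.
have Hsub z : tvars_in (fun n => n < 4) z ->
    tvars_in X (tsubst (fun n => nth s [:: s; t; l; r] n) z).
  move=> Hz n /toccurs_tsubst [m /Hz].
  by case: m => [|[|[|[|m]]]] //= _; [apply: Hs|apply: Ht|apply: Hl|apply: Hr].
exact: (IH _ _ HL' (Hsub _ Hv1) (Hsub _ Hv2) p Hp).
Qed.

End PrincipalCongruences.

(** * Coherence *)

Definition Vimplies (E1 E2 : seq eqn) : Prop :=
  forall (B : algebra) (u : nat -> B), V B -> holds_all u E1 -> holds_all u E2.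

Section Constant.
Variable c : F.
Hypothesis hc : ar c = 0.
Local Notation cterm := (Defs.cterm F ar c hc).
Local Notation fbot := (Defs.fbot F ar c hc).

Definition celt (B : algebra) : B := ops B c (fun i => False_rect _ (ord_ar0 F ar c hc i)).

Lemma eval_cterm (B : algebra) (w : nat -> B) : eval (novoid B) w cterm = celt B.
Proof.
rewrite /Defs.cterm /=; congr (ops B c); apply: functional_extensionality => i.
by case: (ord_ar0 F ar c hc i).
Qed.

Lemma gen_first_n_term (A : algebra) (k : nat) (v : nat -> A) a :
  gen (first_n k v) a -> exists2 u, tvars_in (fun n => n < k) u & eval (novoid A) v u = a.
Proof.
elim=> [x [i Hi ->]|f args _ IH]; first by exists (Var i) => //= n <-.
have [uf Huf] : exists uf : 'I_(ar f) -> term void, forall i,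
    tvars_in (fun n => n < k) (uf i) /\ eval (novoid A) v (uf i) = args i.
  apply: (choice (fun i u => tvars_in (fun n => n < k) u /\ eval (novoid A) v u = args i)).
  by move=> i; case: (IH i) => u; exists u.
exists (App f uf); first by move=> n [i /(proj1 (Huf i))].
by rewrite /=; congr (ops A f); apply: functional_extensionality => i; rewrite (proj2 (Huf i)).
Qed.

Section GeneratedBySeq.
Variable A : algebra.
Variable w : nat -> A.
Variable xs : seq nat.
Let S := first_n (size xs) (fun i => w (nth 0 xs i)).

Lemma gen_seq_term a :
  gen S a -> exists2 u, tvars_in (fun n => n \in xs) u & eval (novoid A) w u = a.
Proof.
case/gen_first_n_term=> u Hu <-; exists (tsubst (fun i => Var (nth 0 xs i)) u).
- by move=> n /toccurs_tsubst [i /Hu Hi /= <-]; rewrite mem_nth.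
- by rewrite eval_tsubst.
Qed.

Lemma subalg_seq_gens : exists v : nat -> subalg S, forall n, n \in xs -> proj1_sig (v n) = w n.
Proof.
apply: (choice (fun n (x : subalg S) => n \in xs -> proj1_sig x = w n)) => n.
case Hn: (n \in xs); last by exists (celt _).
have Hg : gen S (w n) by apply: gen_base; exists (index n xs); rewrite ?index_mem ?nth_index.
by exists (exist _ _ Hg).
Qed.

End GeneratedBySeq.

Definition eqns_pair (E : seq eqn) (p q : term void) : Prop :=
  exists2 e, List.In e E & p = e.1 /\ q = e.2.

Section Coherence.
Variable zs : seq nat.
Hypothesis zs_uniq : uniq zs.
Variable gam : seq eqn.
Hypothesis gam_vars : eqns_vars_in (fun n => n \in zs) gam.

(* The algebra of [V] presented by generators [zs] and relations [gam]; the other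
   variables are sent to the constant [c] so that [zs] generates it. *)
Definition gam_rel (p q : term void) : Prop :=
  eqns_pair gam p q \/ exists m, m \notin zs /\ p = Var m /\ q = cterm.

Definition gam_alg : algebra := pres gam_rel.
Definition gam_gen (n : nat) : gam_alg := pres_cls gam_rel (Var n).

Lemma eval_gam_gen (t : term void) : eval (novoid gam_alg) gam_gen t = pres_cls gam_rel t.
Proof. by rewrite /gam_gen eval_pres_cls tsubst_Var. Qed.

Lemma gam_holds : holds_all gam_gen gam.
Proof.
by move=> e He; rewrite /Defs.eqn_holds !eval_gam_gen; apply: pres_cls_rel; left; exists e.
Qed.

Lemma gam_alg_lift (B : algebra) (w : nat -> B) : V B -> holds_all w gam ->
  exists h : gam_alg -> B, hom h /\ forall n, n \in zs -> h (gam_gen n) = w n.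
Proof.
move=> HB Hw; pose w' n := if n \in zs then w n else celt B.
have [|h [Hh Hhw]] := @pres_lift _ gam_rel B (novoid B) w' HB.
  move=> p q [[e He [-> ->]]|[m [Hm [-> ->]]]]; last by rewrite eval_cterm /= /w' (negbTE Hm).
  have Hww' n : n \in zs -> w n = w' n by rewrite /w' => ->.
  by have Hw' := eq_holds_all gam_vars Hww' Hw; apply: Hw'.
by exists h; split=> // n Hn; rewrite /gam_gen Hhw /= /w' Hn.
Qed.

Lemma gam_alg_fin_pres : fin_pres F ar V gam_alg.
Proof.
split; first exact: pres_in_variety.
pose ren (t : term void) : term void := tsubst (fun m => Var (index m zs)) t.
have eval_ren (B : algebra) (w : nat -> B) t : tvars_in (fun n => n \in zs) t ->
    eval (novoid B) (fun i => w (nth 0 zs i)) (ren t) = eval (novoid B) w t.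
  move=> Ht; rewrite eval_tsubst /=.
  by apply: eq_eval_vars => n /Ht Hn; rewrite nth_index.
exists (size zs), [seq (ren e.1, ren e.2) | e <- gam], (fun i => gam_gen (nth 0 zs i)).
split; last split; last split.
- move=> p /List.in_map_iff [e [<- He]]; have [H1 H2] := gam_vars He.
  by split=> n /toccurs_tsubst [m Hm /= <-]; rewrite index_mem; [apply: H1|apply: H2].
- move=> p /List.in_map_iff [e [<- He]]; have [H1 H2] := gam_vars He.
  by rewrite /Defs.eqn_holds !eval_ren //; apply: gam_holds.
- move=> x; have [t ->] := pres_cls_surj x; elim: t => [n|[]|f args IH].
  + case Hn: (n \in zs).
      by apply: gen_base; exists (index n zs); rewrite ?index_mem ?nth_index.
    rewrite (@pres_cls_rel _ gam_rel (Var n) cterm); last by right; exists n; rewrite Hn.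
    by rewrite /Defs.cterm pres_cls_hom; apply: gen_op => i; case: (ord_ar0 F ar c hc i).
  + by rewrite pres_cls_hom; apply: gen_op.
- move=> B HB w Hw.
  have [|h [Hh Hhw]] := @gam_alg_lift B (fun n => w (index n zs)) HB.
    move=> e He; have := Hw (ren e.1, ren e.2) (List.in_map _ _ _ He).
    by rewrite /Defs.eqn_holds /ren !eval_tsubst.
  by exists h; split=> // i Hi; rewrite Hhw ?mem_nth // index_uniq.
Qed.

Section Projection.
Variable xs : seq nat.
Hypothesis xs_sub : {subset xs <= zs}.

Let k := size xs.
Let gx (i : nat) : gam_alg := gam_gen (nth 0 xs i).
Let Q := subalg (first_n k gx).

(* A finite presentation of the subalgebra [Q] generated by [xs], together with
   terms translating between its generators and those of [xs]. *)
Variables (m : nat) (E : seq eqn) (g : nat -> Q).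
Hypothesis E_holds : holds_all g E.
Hypothesis Q_lift : forall B : algebra, V B -> forall w : nat -> B, holds_all w E ->
  exists h : Q -> B, hom h /\ forall j, j < m -> h (g j) = w j.
Variables (sg rho : nat -> term void).
Hypothesis sg_vars : forall j, tvars_in (fun n => n \in xs) (sg j).
Hypothesis sg_eval : forall j, eval (novoid gam_alg) gam_gen (sg j) = proj1_sig (g j).
Hypothesis rho_vars : forall i, i < k -> tvars_in (fun n => n < m) (rho i).
Hypothesis rho_eval : forall i, i < k -> proj1_sig (eval (novoid Q) g (rho i)) = gx i.

Definition theta : seq eqn :=
  [seq (tsubst sg e.1, tsubst sg e.2) | e <- E] ++
  [seq (Var (nth 0 xs i), tsubst sg (rho i)) | i <- iota 0 k].

Lemma in_theta_cases e : List.In e theta ->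
  (exists2 e', List.In e' E & e = (tsubst sg e'.1, tsubst sg e'.2)) \/
  (exists2 i, i < k & e = (Var (nth 0 xs i), tsubst sg (rho i))).
Proof.
move=> He; case: (List.in_app_or _ _ _ He) => /List.in_map_iff [x [<- Hx]].
  by left; exists x.
by right; exists x => //; move/In_mem: Hx; rewrite mem_iota.
Qed.

Lemma theta_vars : eqns_vars_in (fun n => n \in xs) theta.
Proof.
have Hsg t : tvars_in (fun n => n \in xs) (tsubst sg t).
  by move=> n /toccurs_tsubst [j _ /sg_vars].
move=> e /in_theta_cases [[e' _ ->]|[i Hi ->]]; split; try apply: Hsg.
by move=> n /= <-; rewrite mem_nth.
Qed.

Lemma gam_implies_theta : Vimplies gam theta.
Proof.
have Hval : hom (fun z : Q => proj1_sig z) by case: (subalg_val_embedding (first_n k gx)).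
have sg_subst t : eval (novoid gam_alg) gam_gen (tsubst sg t) = proj1_sig (eval (novoid Q) g t).
  by rewrite eval_tsubst (hom_eval_void _ _ Hval); apply: eq_eval_vars => n _.
move=> B w HB Hw; have [h [Hh Hhw]] := gam_alg_lift HB Hw.
have hw n : n \in xs -> h (gam_gen n) = w n by move=> Hn; rewrite Hhw ?xs_sub.
apply: (eq_holds_all theta_vars hw) => e He.
rewrite /Defs.eqn_holds -!(hom_eval_void _ _ Hh); congr h.
case/in_theta_cases: He => [[e' He' ->]|[i Hi ->]] /=; rewrite !sg_subst.
- by rewrite (E_holds He').
- by rewrite rho_eval.
Qed.

Lemma theta_lift (B : algebra) (w : nat -> B) : V B -> holds_all w theta ->
  exists h : Q -> B, hom h /\ forall i (z : Q), i < k -> proj1_sig z = gx i -> h z = w (nth 0 xs i).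
Proof.
move=> HB Hw; pose w' j := eval (novoid B) w (sg j).
have [|h [Hh Hhg]] := Q_lift HB (w := w').
  move=> e He; have := Hw (tsubst sg e.1, tsubst sg e.2).
  by rewrite /Defs.eqn_holds !eval_tsubst; apply; apply/List.in_or_app; left; apply: List.in_map.
exists h; split=> // i z Hi Hz.
have -> : z = eval (novoid Q) g (rho i).
  by apply: (proj2 (subalg_val_embedding _)); rewrite Hz rho_eval.
rewrite (hom_eval_void _ _ Hh) (eq_eval_vars _ (w:=w') (t:=rho i)); last first.
  by move=> n /(rho_vars Hi) Hn; rewrite Hhg.
have := Hw (Var (nth 0 xs i), tsubst sg (rho i)).
rewrite /Defs.eqn_holds eval_tsubst /= => -> //.
by apply/List.in_or_app; right; apply: List.in_map; apply/In_mem; rewrite mem_iota.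
Qed.

Lemma theta_axiomatizes (E' : seq eqn) : eqns_vars_in (fun n => n \in xs) E' ->
  Vimplies gam E' -> Vimplies theta E'.
Proof.
move=> HE'v HE' B w HB Hw; have [h [Hh Hhw]] := theta_lift HB Hw.
have [v Hv] := subalg_seq_gens gam_gen xs.
have hv n : n \in xs -> h (v n) = w n.
  move=> Hn; rewrite -{2}(nth_index 0 Hn); apply: Hhw; first by rewrite index_mem.
  by rewrite Hv // /gx nth_index.
apply: (eq_holds_all HE'v hv) => e He.
rewrite /Defs.eqn_holds -!(hom_eval_void _ _ Hh); congr h.
apply: (proj2 (subalg_val_embedding _)).
have Hval : hom (fun z : Q => proj1_sig z) by case: (subalg_val_embedding (first_n k gx)).
rewrite !(hom_eval_void _ _ Hval).
have HE'g := HE' _ _ (pres_in_variety gam_rel) gam_holds.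
by apply: (eq_holds_all HE'v (w := gam_gen)) (HE'g) e He => n /Hv ->.
Qed.

End Projection.

Lemma coherent_consequences (xs : seq nat) : coherent F ar V -> {subset xs <= zs} ->
  exists th : seq eqn, eqns_vars_in (fun n => n \in xs) th /\ Vimplies gam th /\
    forall E, eqns_vars_in (fun n => n \in xs) E -> Vimplies gam E -> Vimplies th E.
Proof.
move=> Hcoh Hxs; pose gx i := gam_gen (nth 0 xs i).
have [_ [m [E [g [_ [HEg [Hgen HQ]]]]]]] := Hcoh _ gam_alg_fin_pres (size xs) gx.
have [sg Hsg] : exists sg : nat -> term void, forall j,
    tvars_in (fun n => n \in xs) (sg j) /\ eval (novoid gam_alg) gam_gen (sg j) = proj1_sig (g j).
  apply: (choice (fun j u => tvars_in (fun n => n \in xs) u /\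
                             eval (novoid gam_alg) gam_gen u = proj1_sig (g j))) => j.
  by have [u Hu Hev] := gen_seq_term (proj2_sig (g j)); exists u.
have [rho Hrho] : exists rho : nat -> term void, forall i, i < size xs ->
    tvars_in (fun n => n < m) (rho i) /\ proj1_sig (eval (novoid _) g (rho i)) = gx i.
  apply: (choice (fun i r => i < size xs -> tvars_in (fun n => n < m) r /\
                             proj1_sig (eval (novoid _) g r) = gx i)) => i.
  case: (ltnP i (size xs)) => Hi; last by exists (Var 0).
  have Hg : gen (first_n (size xs) gx) (gx i) by apply: gen_base; exists i.
  by have [r Hr Hev] := gen_first_n_term (Hgen (exist _ (gx i) Hg)); exists r; rewrite Hev.
have sg_vars j := proj1 (Hsg j); have sg_eval j := proj2 (Hsg j).
have rho_vars i Hi := proj1 (Hrho i Hi); have rho_eval i Hi := proj2 (Hrho i Hi).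
exists (theta xs E sg rho); split; last split.
- exact: theta_vars sg_vars.
- exact (gam_implies_theta Hxs HEg sg_vars sg_eval rho_eval).
- exact (theta_axiomatizes HQ rho_vars rho_eval).
Qed.

End Coherence.

(** * Quantifier elimination in existentially closed algebras *)

Definition prim_sat (B : algebra) (w : nat -> B) (gam dl : seq eqn) : Prop :=
  holds_all w gam /\ forall e, List.In e dl -> ~ eqn_holds w e.

Definition realizable (A : algebra) (gam dl : seq eqn) (y : nat) (w : nat -> A) : Prop :=
  exists (D : algebra) (h : A -> D) (d : D),
    V D /\ embedding h /\ prim_sat (upd (fun n => h (w n)) y d) gam dl.

Definition indep_of (y : nat) (p : form void) : Prop :=
  forall (B : algebra) (w : nat -> B) a, sat (novoid B) (upd w y a) p <-> sat (novoid B) w p.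

Lemma conj_eqs_indep (xs : seq nat) y (E : seq eqn) :
  y \notin xs -> eqns_vars_in (fun n => n \in xs) E -> indep_of y (conj_eqs E).
Proof.
move=> Hy HE B w a; rewrite !sat_conj_eqs.
have Hupd n : n \in xs -> upd w y a n = w n.
  by move=> Hn; apply: upd_neq => Eny; rewrite -Eny Hn in Hy.
by split; apply: eq_holds_all HE _ => n /Hupd ->.
Qed.

Definition ex_closed (B : algebra) : Prop :=
  V B /\ forall gam dl y (w : nat -> B),
    realizable gam dl y w -> exists b, prim_sat (upd w y b) gam dl.

Definition dnf_sat (B : algebra) (w : nat -> B) (ds : seq (seq eqn * seq eqn)) : Prop :=
  exists2 gd, List.In gd ds & prim_sat w gd.1 gd.2.

Definition dnf_and (ds es : seq (seq eqn * seq eqn)) : seq (seq eqn * seq eqn) :=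
  List.flat_map (fun a => List.map (fun b => (a.1 ++ b.1, a.2 ++ b.2)) es) ds.

Lemma dnf_sat_cat (B : algebra) (w : nat -> B) ds es :
  dnf_sat w (ds ++ es) <-> dnf_sat w ds \/ dnf_sat w es.
Proof.
split.
- by case=> gd /List.in_app_iff [H|H] K; [left|right]; exists gd.
- by case=> -[gd H K]; exists gd => //; apply: List.in_or_app; [left|right].
Qed.

Lemma prim_sat_cat (B : algebra) (w : nat -> B) a1 a2 b1 b2 :
  prim_sat w (a1 ++ b1) (a2 ++ b2) <-> prim_sat w a1 a2 /\ prim_sat w b1 b2.
Proof.
rewrite /prim_sat /holds_all; split.
- case=> H1 H2; split; split=> e He; [apply: H1|apply: H2|apply: H1|apply: H2];
  apply: List.in_or_app; by [left|left|right|right].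
- case=> -[H1 H2] [K1 K2]; split=> e /List.in_app_iff [He|He];
  by [apply: H1|apply: K1|apply: H2|apply: K2].
Qed.

Lemma dnf_sat_and (B : algebra) (w : nat -> B) ds es :
  dnf_sat w (dnf_and ds es) <-> dnf_sat w ds /\ dnf_sat w es.
Proof.
split.
- case=> gd /List.in_flat_map [a [Ha /List.in_map_iff [b [<- Hb]]]] /prim_sat_cat [K1 K2].
  by split; [exists a|exists b].
- case=> -[a Ha K1] [b Hb K2]; exists (a.1 ++ b.1, a.2 ++ b.2); last exact/prim_sat_cat.
  by apply/List.in_flat_map; exists a; split=> //; apply/List.in_map_iff; exists b.
Qed.

Lemma qfree_dnf (q : form void) : qfree q -> exists dp dn,
  (forall (B : algebra) (w : nat -> B), sat (novoid B) w q <-> dnf_sat w dp) /\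
  (forall (B : algebra) (w : nat -> B), ~ sat (novoid B) w q <-> dnf_sat w dn).
Proof.
elim: q => [t1 t2|q IH|q IHq r IHr|q IHq r IHr|q IHq r IHr|n q IH|n q IH] //=.
- move=> _; exists [:: ([:: (t1, t2)], [::])], [:: ([::], [:: (t1, t2)])]; split=> B w.
  + split; first by move=> H; exists ([:: (t1, t2)], [::]); [left|split=> // e [<-|]].
    by case=> gd [<-|//] [H _]; apply: (H (t1, t2)); left.
  + split; first by move=> H; exists ([::], [:: (t1, t2)]); [left|split=> // e [<-|]].
    by case=> gd [<-|//] [_ H]; apply: (H (t1, t2)); left.
- move=> /IH [dp [dn [H1 H2]]]; exists dn, dp; split=> B w; first by rewrite H2.
  by rewrite -H1; split; [apply: NNPP|move=> K K'].
- move=> [/IHq [dpq [dnq [Hq1 Hq2]]] /IHr [dpr [dnr [Hr1 Hr2]]]].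
  exists (dnf_and dpq dpr), (dnq ++ dnr); split=> B w.
  + by rewrite dnf_sat_and -Hq1 -Hr1.
  + by rewrite dnf_sat_cat -Hq2 -Hr2; tauto.
- move=> [/IHq [dpq [dnq [Hq1 Hq2]]] /IHr [dpr [dnr [Hr1 Hr2]]]].
  exists (dpq ++ dpr), (dnf_and dnq dnr); split=> B w.
  + by rewrite dnf_sat_cat -Hq1 -Hr1.
  + by rewrite dnf_sat_and -Hq2 -Hr2; tauto.
- move=> [/IHq [dpq [dnq [Hq1 Hq2]]] /IHr [dpr [dnr [Hr1 Hr2]]]].
  exists (dnq ++ dpr), (dnf_and dpq dnr); split=> B w.
  + by rewrite dnf_sat_cat -Hq2 -Hr1; tauto.
  + by rewrite dnf_sat_and -Hq1 -Hr2; tauto.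
Qed.

Section Elimination.
Variable alpha : seq eqn.
Hypothesis alpha_vars : eqns_vars_in (fun n => n < 4) alpha.
Hypothesis alpha_Cg : forall A, V A -> forall a1 a2 b1 b2 : A,
  in_Cg F ar b1 b2 a1 a2 <->
  sat (novoid A) (fun n => nth a1 [:: a1; a2; b1; b2] n) (conj_eqs alpha).
Hypothesis V_coherent : coherent F ar V.
Hypothesis V_AP : AP F ar V.
Hypothesis V_EVRP : EVRP F ar c hc V.

Local Notation cg_eqs := (cg_eqs alpha).

Section Realization.
Variables (gam dl : seq eqn) (y : nat) (xs : seq nat).
Hypothesis gam_vars : eqns_vars_in (fun n => n \in y :: xs) gam.
Hypothesis dl_vars : eqns_vars_in (fun n => n \in y :: xs) dl.
Variables (A : algebra) (w : nat -> A).
Hypothesis A_in_V : V A.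
Hypothesis w_consequences : forall E, eqns_vars_in (fun n => n \in xs) E ->
  Vimplies gam E -> holds_all w E.
Hypothesis w_not_forced : forall d, List.In d dl -> forall E, eqns_vars_in (fun n => n \in xs) E ->
  holds_all w E -> ~ Vimplies (gam ++ E) [:: d].

Definition xs_diag (s t : term void) : Prop :=
  tvars_in (fun n => n \in xs) s /\ tvars_in (fun n => n \in xs) t /\
  eval (novoid A) w s = eval (novoid A) w t.

(* [w] extended by a new element for [y] subject to [gam]: the algebra presented by
   the diagram of the subalgebra generated by [w] on [xs], together with [gam]. *)
Let ext_alg := pres (fun p q => eqns_pair gam p q \/ xs_diag p q).
Let cls : term void -> ext_alg := pres_cls (fun p q => eqns_pair gam p q \/ xs_diag p q).

Lemma ext_alg_eq_compact s t : cls s = cls t ->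
  exists L : seq eqn, eqns_vars_in (fun n => n \in xs) L /\ holds_all w L /\
    Vimplies (gam ++ L) [:: (s, t)].
Proof.
case/pres_cls_compact=> L [HL Himp]; exists L; split; last split.
- by move=> e /HL [H1 [H2 _]].
- by move=> e /HL [_ [_ He]].
move=> B u HB Hu _ [<-|//].
apply: (Himp B (novoid B) u HB) => [p q [e He [-> ->]]|e He]; apply: Hu; apply/List.in_or_app.
- by left.
- by right.
Qed.

Lemma ext_alg_faithful s t : tvars_in (fun n => n \in xs) s -> tvars_in (fun n => n \in xs) t ->
  cls s = cls t -> eval (novoid A) w s = eval (novoid A) w t.
Proof.
move=> Hs Ht /ext_alg_eq_compact [L [HLv [HLw Himp]]].
apply: (cg_eqs_eval alpha_vars alpha_Cg A_in_V HLw); apply: w_consequences.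
  exact: cg_eqs_vars.
apply: (cg_eqs_deduction alpha_vars alpha_Cg) => B u HB Hg HL.
by apply: (Himp B u HB _ (s, t)); [move=> e /List.in_app_iff [/Hg|/HL]|left].
Qed.

Lemma ext_alg_dl_distinct d : List.In d dl -> cls d.1 <> cls d.2.
Proof.
case: d => l r Hd /ext_alg_eq_compact [L [HLv [HLw Himp]]].
exact: (w_not_forced Hd HLv HLw).
Qed.

Lemma subalg_embeds_ext_alg :
  exists j : subalg (first_n (size xs) (fun i => w (nth 0 xs i))) -> ext_alg,
  embedding j /\ forall z r, tvars_in (fun n => n \in xs) r ->
    eval (novoid A) w r = proj1_sig z -> j z = cls r.
Proof.
set S := subalg _.
have [rep Hrep] : exists rep : S -> term void, forall z,
    tvars_in (fun n => n \in xs) (rep z) /\ eval (novoid A) w (rep z) = proj1_sig z.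
  apply: (choice (fun (z : S) r => tvars_in (fun n => n \in xs) r /\
                                   eval (novoid A) w r = proj1_sig z)) => z.
  by have [u Hu Hev] := gen_seq_term (proj2_sig z); exists u.
have j_spec z r : tvars_in (fun n => n \in xs) r -> eval (novoid A) w r = proj1_sig z ->
    cls (rep z) = cls r.
  move=> Hr Hev; apply: pres_cls_rel; right; split; first exact: (proj1 (Hrep z)).
  by split=> //; rewrite (proj2 (Hrep z)) Hev.
exists (fun z => cls (rep z)); split=> //; split.
- move=> f zz; rewrite (j_spec _ (App f (fun i => rep (zz i)))); first exact: pres_cls_hom.
    by move=> n [i /(proj1 (Hrep (zz i)))].
  rewrite /=; congr (ops A f); apply: functional_extensionality => i.
  by rewrite (proj2 (Hrep (zz i))).
- move=> z1 z2 /ext_alg_faithful Hz; apply: (proj2 (subalg_val_embedding _)).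
  by rewrite -(proj2 (Hrep z1)) -(proj2 (Hrep z2)); apply: Hz; [case: (Hrep z1)|case: (Hrep z2)].
Qed.

Lemma realizable_of_consistent : realizable gam dl y w.
Proof.
have [j [Hj j_cls]] := subalg_embeds_ext_alg.
have [D [h [kk [HD [Hh [Hkk Hcomm]]]]]] :=
  V_AP (variety_subalg _ A_in_V) A_in_V (pres_in_variety _) (subalg_val_embedding _) Hj.
exists D, h, (kk (cls (Var y))); split=> //; split=> //.
set u := upd _ y _.
have Hu n : n \in y :: xs -> u n = kk (cls (Var n)).
  rewrite inE; case: (eqVneq n y) => [->|Hny] /= Hn; first by rewrite /u upd_eq.
  rewrite /u upd_neq; last by move=> Eny; rewrite Eny eqxx in Hny.
  have [v Hv] := subalg_seq_gens w xs.
  by rewrite -(Hv n Hn) Hcomm (j_cls _ (Var n)) //= ?Hv // => m <-.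
have Hev t : tvars_in (fun n => n \in y :: xs) t -> eval (novoid D) u t = kk (cls t).
  move=> Ht; rewrite (eq_eval_vars _ (w := fun n => kk (cls (Var n))) (t := t)); last first.
    by move=> n /Ht /Hu.
  by rewrite -(hom_eval_void _ _ (proj1 Hkk)) eval_pres_cls tsubst_Var.
split=> [e /[dup] He /gam_vars [H1 H2]|e /[dup] He /dl_vars [H1 H2]];
  rewrite /Defs.eqn_holds !Hev //.
- by congr kk; apply: pres_cls_rel; left; exists e.
- by move=> /(proj2 Hkk); apply: ext_alg_dl_distinct.
Qed.

End Realization.

(* EVRP gives the weakest condition on [xs] forcing [d] modulo [gam], through the
   equations [cg_eqs d.1 d.2 gam]; its negation separates [d] from [gam]. *)
Lemma eqn_separator (gam : seq eqn) (y : nat) (xs : seq nat) (d : eqn) : y \notin xs ->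
  eqns_vars_in (fun n => n \in y :: xs) gam -> eqns_vars_in (fun n => n \in y :: xs) [:: d] ->
  exists chi : form void, qfree chi /\ indep_of y chi /\
    (forall (B : algebra) (w : nat -> B), V B -> holds_all w gam -> ~ eqn_holds w d ->
       sat (novoid B) w chi) /\
    (forall (A : algebra) (w : nat -> A), V A -> sat (novoid A) w chi ->
       forall E, eqns_vars_in (fun n => n \in xs) E -> holds_all w E ->
       ~ Vimplies (gam ++ E) [:: d]).
Proof.
move=> Hy Hgam Hd; have [Hd1 Hd2] := Hd d (or_introl erefl).
have Hcg : eqns_vars_in (fun m => List.In m (y :: xs)) (cg_eqs d.1 d.2 gam).
  by apply: eqns_vars_in_mono (cg_eqs_vars alpha_vars Hgam Hd1 Hd2) => n /In_mem.
have [|pi [Hpi [pi_cg pi_weakest]]] := V_EVRP (xs := xs) (y := y) _ Hcg.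
  by move/In_mem; apply/negP.
exists (FNot pi); split; last split; last split.
- by case: Hpi => [->|[E [_ ->]]]; last exact: conj_eqs_qfree.
- case: Hpi => [->|[E [HE ->]]] B w a.
    by split; apply: sentence_sat => n [[i _]|[i _]]; case: (ord_ar0 F ar c hc i).
  by rewrite /= (conj_eqs_indep Hy) //; apply: eqns_vars_in_mono HE => n /In_mem.
- move=> B w HB Hw Hnd Hpiw; apply: Hnd.
  apply: (cg_eqs_eval alpha_vars alpha_Cg HB Hw); apply/sat_conj_eqs; exact: pi_cg B HB w Hpiw.
- move=> A w HA Hnpi E HE Hw Himp; apply: Hnpi.
  have HEin : eqns_vars_in (fun m => List.In m xs) E.
    by apply: eqns_vars_in_mono HE => n /In_mem.
  have HEcg : Vmodels V (FImp (conj_eqs E) (conj_eqs (cg_eqs d.1 d.2 gam))).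
    move=> B HB u /sat_conj_eqs HEu; apply/sat_conj_eqs.
    apply: (cg_eqs_deduction alpha_vars alpha_Cg _ HB HEu) => B' u' HB' HE' Hg'.
    apply: (Himp B' u' HB' _ d (or_introl erefl)) => e He.
    by case: (List.in_app_or _ _ _ He) => [/Hg'|/HE'].
  by apply: (pi_weakest E HEin HEcg A HA w); apply/sat_conj_eqs.
Qed.

Lemma separator (gam dl : seq eqn) (y : nat) (xs : seq nat) : y \notin xs ->
  eqns_vars_in (fun n => n \in y :: xs) gam -> eqns_vars_in (fun n => n \in y :: xs) dl ->
  exists chi : form void, qfree chi /\ indep_of y chi /\
    (forall (B : algebra) (w : nat -> B), V B -> prim_sat w gam dl -> sat (novoid B) w chi) /\
    (forall (A : algebra) (w : nat -> A), V A -> sat (novoid A) w chi ->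
       forall d, List.In d dl -> forall E, eqns_vars_in (fun n => n \in xs) E -> holds_all w E ->
       ~ Vimplies (gam ++ E) [:: d]).
Proof.
move=> Hy Hgam; elim: dl => [|d dl IH] Hdl.
  exists (conj_eqs [::]); split; first exact: conj_eqs_qfree.
  by split; [apply: conj_eqs_indep Hy _|split].
have [|chi [Hq [Hi [Hsat Hsep]]]] := IH; first by move=> e He; apply: Hdl; right.
have [|chd [Hqd [Hid [Hsatd Hsepd]]]] := eqn_separator Hy Hgam (d := d).
  by move=> e [<-|//]; apply: Hdl; left.
exists (FAnd chd chi); split; first by split.
split; first by move=> B w a /=; rewrite Hi Hid.
split=> [B w HB [Hg Hd]|A w HA [Hchd Hchi] d' [<-|Hd']]; last exact: Hsep.
- split=> /=; first by apply: Hsatd => // /(Hd d (or_introl erefl)).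
  by apply: Hsat => //; split=> // e He; apply: Hd; right.
- exact: Hsepd.
Qed.

(* [psi] says that the equational consequences of [gam] on the other variables
   hold (a finite set of them suffices by coherence) and that no equation of [dl]
   is forced; a witness for [y] then exists in an amalgam. *)
Lemma prim_elim (gam dl : seq eqn) (y : nat) : exists psi : form void,
  qfree psi /\ indep_of y psi /\
  (forall (B : algebra) (w : nat -> B), V B -> prim_sat w gam dl -> sat (novoid B) w psi) /\
  (forall (A : algebra) (w : nat -> A), V A -> sat (novoid A) w psi -> realizable gam dl y w).
Proof.
set xs := undup [seq n <- eqns_vars (gam ++ dl) | n != y].
have Hy : y \notin xs by rewrite mem_undup mem_filter eqxx.
have Hvars E : (forall e, List.In e E -> List.In e (gam ++ dl)) ->
    eqns_vars_in (fun n => n \in y :: xs) E.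
  move=> HE e /HE /eqns_vars_in_vars [H1 H2].
  have K n : n \in eqns_vars (gam ++ dl) -> n \in y :: xs.
    by move=> Hn; rewrite inE mem_undup mem_filter Hn andbT; case: eqVneq.
  by split=> n Hn; apply: K; [apply: H1|apply: H2].
have Hgam := Hvars gam (fun e He => List.in_or_app _ _ _ (or_introl He)).
have Hdl := Hvars dl (fun e He => List.in_or_app _ _ _ (or_intror He)).
have [||th [Hthv [Hgth Hthax]]] :=
  coherent_consequences (zs := y :: xs) (xs := xs) _ Hgam V_coherent.
- by rewrite /= Hy undup_uniq.
- by move=> n Hn; rewrite inE Hn orbT.
have [chi [Hq [Hi [Hsat Hsep]]]] := separator Hy Hgam Hdl.
exists (FAnd (conj_eqs th) chi); split; first by split; [apply: conj_eqs_qfree|].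
split; first by move=> B w a /=; rewrite Hi (conj_eqs_indep Hy).
split=> [B w HB [Hg Hd]|A w HA [/sat_conj_eqs Hth Hchi]].
- by split; [apply/sat_conj_eqs/(Hgth B w HB)|apply: Hsat].
- apply: (realizable_of_consistent Hgam Hdl HA) => [E HE HgE|d Hd E HE Hw].
    exact: Hthax HE HgE A w HA Hth.
  exact: Hsep Hchi d Hd E HE Hw.
Qed.

Lemma ex_elim_dnf (ds : seq (seq eqn * seq eqn)) (y : nat) : exists q : form void, qfree q /\
  forall (B : algebra) (w : nat -> B), ex_closed B ->
    ((exists a, dnf_sat (upd w y a) ds) <-> sat (novoid B) w q).
Proof.
elim: ds => [|gd ds [q [Hq IH]]].
  exists fbot; split=> // B w _; split; first by case=> a [].
  by move=> H; exfalso; apply: H.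
have [psi [Hpsi [Hind [Hsat Hreal]]]] := prim_elim gd.1 gd.2 y.
exists (FOr psi q); split=> // B w [HB Hec] /=; rewrite -IH //; split.
- case=> a [gd' [<-|Hgd'] K]; last by right; exists a, gd'.
  by left; rewrite -(Hind B w a); apply: Hsat.
- case=> [/(Hreal B w HB)/Hec [b Hb]|[a [gd' Hgd' K]]].
    by exists b, gd => //; left.
  by exists a, gd' => //; right.
Qed.

Lemma ex_elim_qfree (q : form void) (y : nat) : qfree q -> exists q' : form void, qfree q' /\
  forall (B : algebra) (w : nat -> B), ex_closed B ->
    ((exists a, sat (novoid B) (upd w y a) q) <-> sat (novoid B) w q').
Proof.
move=> /qfree_dnf [dp [_ [Hdp _]]]; have [q' [Hq' H]] := ex_elim_dnf dp y.
exists q'; split=> // B w HB; rewrite -H //.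
by split=> -[a K]; exists a; move: K; rewrite Hdp.
Qed.

Lemma ex_closed_qe (p : form void) : exists q : form void, qfree q /\
  forall (B : algebra) (w : nat -> B), ex_closed B -> (sat (novoid B) w p <-> sat (novoid B) w q).
Proof.
elim: p => [t1 t2|p [q [Hq IH]]|p [q [Hq IHq]] r [s [Hs IHr]]|p [q [Hq IHq]] r [s [Hs IHr]]
  |p [q [Hq IHq]] r [s [Hs IHr]]|n p [q [Hq IH]]|n p [q [Hq IH]]].
- by exists (FEq t1 t2).
- by exists (FNot q); split=> // B w HB /=; rewrite IH.
- by exists (FAnd q s); split=> // B w HB /=; rewrite IHq ?IHr.
- by exists (FOr q s); split=> // B w HB /=; rewrite IHq ?IHr.
- by exists (FImp q s); split=> // B w HB /=; rewrite IHq ?IHr.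
- have [q' [Hq' H]] := ex_elim_qfree n (Hq : qfree (FNot q)).
  exists (FNot q'); split=> // B w HB /=; rewrite -H //; split.
  + by move=> K [a /= Ka]; apply: Ka; rewrite -IH //; apply: K.
  + by move=> K a; rewrite IH //; apply: NNPP => Ka; apply: K; exists a.
- have [q' [Hq' H]] := ex_elim_qfree n Hq.
  exists q'; split=> // B w HB /=; rewrite -H //.
  by split=> -[a Ka]; exists a; [rewrite -IH|rewrite IH].
Qed.

End Elimination.

(** * Existentially closed extensions *)

Lemma upd_map (A B : algebra) (g : A -> B) (w : nat -> A) y a :
  (fun n => g (upd w y a n)) = upd (fun n => g (w n)) y (g a).
Proof. by apply: functional_extensionality => n; rewrite /Defs.upd; case: eqP. Qed.

Lemma prim_sat_embedding (B D : algebra) (g : B -> D) (w : nat -> B) gam dl :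
  embedding g -> prim_sat w gam dl -> prim_sat (fun n => g (w n)) gam dl.
Proof.
case=> Hg Hinj [Hgam Hdl]; split=> e He; rewrite /Defs.eqn_holds -!(hom_eval_void _ _ Hg).
- by rewrite (Hgam e He).
- by move/Hinj; apply: Hdl.
Qed.

Section OneStep.
Hypothesis V_AP : AP F ar V.
Variable A : algebra.
Hypothesis A_in_V : V A.

Record instance := Instance {
  igam : seq eqn; idl : seq eqn; iy : nat; iw : nat -> A;
  ireal : realizable igam idl iy iw }.

Definition inst_sat (D : algebra) (h : A -> D) (d : instance -> D) (i : instance) : Prop :=
  prim_sat (upd (fun n => h (iw i n)) (iy i) (d i)) (igam i) (idl i).

Lemma multi_amalg (ls : seq instance) : exists (D : algebra) (h : A -> D) (d : instance -> D),
  V D /\ embedding h /\ forall i, List.In i ls -> inst_sat h d i.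
Proof.
elim: ls => [|i ls [D1 [h1 [d1 [HD1 [Hh1 IH]]]]]].
  by exists A, id, (fun _ => celt A); split=> //; split=> //; apply: embedding_id.
have [D2 [h2 [b [HD2 [Hh2 Hb]]]]] := ireal i.
have [E [g1 [g2 [HE [Hg1 [Hg2 Hcomm]]]]]] := V_AP A_in_V HD1 HD2 Hh1 Hh2.
exists E, (fun a => g1 (h1 a)),
  (fun j => if excluded_middle_informative (j = i) then g2 b else g1 (d1 j)).
split=> //; split; first exact: embedding_comp.
move=> j Hj; rewrite /inst_sat; case: (excluded_middle_informative (j = i)) => [Eji|Hji].
- subst j.
  have := prim_sat_embedding Hg2 Hb; rewrite upd_map.
  by have -> : (fun n => g2 (h2 (iw i n))) = fun n => g1 (h1 (iw i n))
    by apply: functional_extensionality => n; rewrite Hcomm.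
- have Hj' : List.In j ls by case: Hj => // Eij; case: Hji.
  by have := prim_sat_embedding Hg1 (IH j Hj'); rewrite upd_map.
Qed.

(* [step_alg] is [A] extended by a fresh generator [Cst (inr i)] for every realizable
   instance [i], subject to the diagram of [A] and the equations of [i]. *)
Definition inst_var (i : instance) (n : nat) : term (A + instance) :=
  if n == iy i then Cst (inr i) else Cst (inl (iw i n)).

Definition diag_rel (p q : term (A + instance)) : Prop :=
  exists f (args : 'I_(ar f) -> A),
    p = Cst (inl (ops A f args)) /\ q = App f (fun j => Cst (inl (args j))).

Definition inst_rel (p q : term (A + instance)) : Prop :=
  exists i e, List.In e (igam i) /\ p = tsubst (inst_var i) e.1 /\ q = tsubst (inst_var i) e.2.

Let step_alg := pres (fun p q => diag_rel p q \/ inst_rel p q).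
Let cls : term (A + instance) -> step_alg := pres_cls (fun p q => diag_rel p q \/ inst_rel p q).

Definition inst_interp (D : algebra) (h : A -> D) (d : instance -> D) (x : A + instance) : D :=
  match x with inl a => h a | inr i => d i end.

Lemma eval_inst_var (D : algebra) (h : A -> D) (d : instance -> D) v i (t : term void) :
  eval (inst_interp h d) v (tsubst (inst_var i) t) =
  eval (novoid D) (upd (fun n => h (iw i n)) (iy i) (d i)) t.
Proof.
by rewrite eval_tsubst; apply: eq_eval_vars => n _; rewrite /inst_var /Defs.upd; case: eqP.
Qed.

Lemma step_alg_eq_compact s t : cls s = cls t -> exists ls : seq instance,
  forall (D : algebra) (h : A -> D) (d : instance -> D), V D -> hom h ->
    (forall i, List.In i ls -> inst_sat h d i) ->
    eval (inst_interp h d) (fun _ => celt D) s = eval (inst_interp h d) (fun _ => celt D) t.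
Proof.
case/pres_cls_compact=> L [HL Himp].
have [ls Hls] : exists ls : seq instance, forall p, List.In p L -> exists i e,
    List.In i ls /\ List.In e (igam i) /\
    p.1 = tsubst (inst_var i) e.1 /\ p.2 = tsubst (inst_var i) e.2.
  elim: L HL {Himp} => [|p L IH] HL; first by exists [::].
  have [ls Hls] := IH (fun q Hq => HL q (or_intror Hq)).
  have [i [e [He [E1 E2]]]] := HL p (or_introl erefl).
  exists (i :: ls) => q [<-|Hq]; first by exists i, e; split; [left|].
  by have [i' [e' [Hi' K]]] := Hls q Hq; exists i', e'; split; [right|].
exists ls => D h d HD Hh Hd.
apply: Himp => // [p q [f [args [-> ->]]]|p /Hls [i [e [Hi [He [-> ->]]]]]].
- by rewrite /= Hh.
- by rewrite !eval_inst_var; apply: (proj1 (Hd i Hi)).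
Qed.

Lemma one_step_ext : exists (A2 : algebra) (e : A -> A2), V A2 /\ embedding e /\
  forall gam dl y w, realizable gam dl y w ->
    exists b, prim_sat (upd (fun n => e (w n)) y b) gam dl.
Proof.
exists step_alg, (fun a => cls (Cst (inl a))); split; first exact: pres_in_variety.
split.
  split=> [f args|a1 a2 /step_alg_eq_compact [ls Hls]].
    rewrite /cls (@pres_cls_rel _ _ (Cst (inl (ops A f args)))
      (App f (fun j => Cst (inl (args j))))).
      exact: pres_cls_hom.
    by left; exists f, args.
  have [D [h [d [HD [[Hh Hinj] Hd]]]]] := multi_amalg ls.
  exact: Hinj (Hls D h d HD Hh Hd).
move=> gam dl y w Hr; pose i := Instance Hr; exists (cls (Cst (inr i))).
have Hval t :
    eval (novoid step_alg) (upd (fun n => cls (Cst (inl (w n)))) y (cls (Cst (inr i)))) t =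
    cls (tsubst (inst_var i) t).
  rewrite /cls -eval_pres_cls; apply: eq_eval_vars => n _.
  by rewrite /inst_var /Defs.upd /=; case: eqP.
split=> e He; rewrite /Defs.eqn_holds !Hval.
  by apply: pres_cls_rel; right; exists i, e.
case/step_alg_eq_compact=> ls Hls.
have [D [h [d [HD [[Hh _] Hd]]]]] := multi_amalg (i :: ls).
have := Hls D h d HD Hh (fun j Hj => Hd j (or_intror Hj)); rewrite !eval_inst_var.
exact: (proj2 (Hd i (or_introl erefl)) e He).
Qed.

End OneStep.

Section ChainUnion.
Variable A : nat -> algebra.
Variable e : forall n, A n -> A n.+1.
Arguments e : clear implicits.
Hypothesis e_embedding : forall n, embedding (e n).

Definition chain_elt := {n : nat & A n}.

(* Junk (the constant [c]) when [x] lives beyond stage [N]. *)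
Fixpoint lift_to (N : nat) (x : chain_elt) : A N :=
  match PeanoNat.Nat.eq_dec (projT1 x) N with
  | left E => eq_rect _ (fun k => A k) (projT2 x) _ E
  | right _ => match N return A N with
               | 0 => celt (A 0)
               | N'.+1 => e N' (lift_to N' x)
               end
  end.

Lemma lift_to_self n (a : A n) : lift_to n (existT _ n a) = a.
Proof.
case: n a => [|n] a //=.
case: (PeanoNat.Nat.eq_dec n n) => E /=; last by case: E.
by rewrite (Eqdep_dec.UIP_refl_nat _ (f_equal_nat _ _ _ _ E)).
Qed.

Lemma lift_to_succ N (x : chain_elt) : projT1 x <= N -> lift_to N.+1 x = e N (lift_to N x).
Proof.
by move=> Hx /=; case: (PeanoNat.Nat.eq_dec (projT1 x) N.+1) => // E; rewrite E ltnn in Hx.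
Qed.

Lemma lift_to_lift_to (x : chain_elt) M N : projT1 x <= M -> M <= N ->
  lift_to N (existT _ M (lift_to M x)) = lift_to N x.
Proof.
move=> H1 H2; rewrite -(subnK H2); elim: (N - M) => [|d IH]; first by rewrite add0n lift_to_self.
by rewrite addSn !lift_to_succ ?IH ?leq_addl // (leq_trans H1 (leq_addl _ _)).
Qed.

Lemma lift_to_embedding n N : n <= N -> embedding (fun a : A n => lift_to N (existT _ n a)).
Proof.
move=> HnN; rewrite -(subnK HnN); elim: (N - n) => [|d IH].
  have -> : (fun a : A n => lift_to (0 + n) (existT _ n a)) = id.
    by apply: functional_extensionality => a; apply: lift_to_self.
  exact: embedding_id.
have -> : (fun a : A n => lift_to (d.+1 + n) (existT _ n a)) =
    (fun a => e (d + n) (lift_to (d + n) (existT _ n a))).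
  by apply: functional_extensionality => a; rewrite -lift_to_succ //= leq_addl.
exact: embedding_comp IH (e_embedding _).
Qed.

Lemma lift_to_mono (x y : chain_elt) N M : N <= M -> lift_to N x = lift_to N y ->
  projT1 x <= N -> projT1 y <= N -> lift_to M x = lift_to M y.
Proof.
move=> HNM Exy Hx Hy; rewrite -(subnK HNM); elim: (M - N) => [|d IH]; first by rewrite add0n.
by rewrite addSn !lift_to_succ ?IH // ?(leq_trans Hy (leq_addl _ _)) ?(leq_trans Hx (leq_addl _ _)).
Qed.

Definition level f (args : 'I_(ar f) -> chain_elt) : nat := \max_(i < ar f) projT1 (args i).

Definition chain_pre : algebra := @Defs.Algebra F ar chain_elt
  (fun f args => existT _ (level args)
     (ops (A (level args)) f (fun i => lift_to (level args) (args i)))).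

Lemma lift_to_ops f (args : 'I_(ar f) -> chain_pre) M : level args <= M ->
  lift_to M (ops chain_pre f args) = ops (A M) f (fun i => lift_to M (args i)).
Proof.
move=> HM; rewrite /= (proj1 (lift_to_embedding HM)); congr (ops (A M) f).
apply: functional_extensionality => i; apply: lift_to_lift_to => //.
exact: (@leq_bigmax _ (fun i => projT1 (args i)) i).
Qed.

Definition chain_eq (x y : chain_pre) : Prop :=
  exists N, projT1 x <= N /\ projT1 y <= N /\ lift_to N x = lift_to N y.

Lemma chain_eq_at (x y : chain_pre) M :
  chain_eq x y -> projT1 x <= M -> projT1 y <= M -> lift_to M x = lift_to M y.
Proof.
case=> N [Hx [Hy Exy]] H1 H2.
have E2 : lift_to (maxn N M) x = lift_to (maxn N M) y by apply: (lift_to_mono (leq_maxl _ _) Exy).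
by apply: (proj2 (lift_to_embedding (leq_maxr N M))); rewrite /= !lift_to_lift_to ?leq_maxr.
Qed.

Lemma chain_eq_congruence : congruence chain_eq.
Proof.
split; first by move=> x; exists (projT1 x).
split; first by move=> x y [N [H1 [H2 H3]]]; exists N.
split=> [x y z Hxy Hyz|f a b Hab].
  set K := maxn (maxn (projT1 x) (projT1 y)) (projT1 z).
  have Kx : projT1 x <= K by rewrite /K !leq_max leqnn.
  have Ky : projT1 y <= K by rewrite /K !leq_max leqnn !orbT.
  have Kz : projT1 z <= K by rewrite /K !leq_max leqnn !orbT.
  by exists K; split=> //; split=> //; rewrite (chain_eq_at Hxy) // (chain_eq_at Hyz).
have [Nf HN] := choice _ Hab.
set M := maxn (maxn (level a) (level b)) (\max_(i < ar f) Nf i).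
have Ma : level a <= M by rewrite /M !leq_max leqnn.
have Mb : level b <= M by rewrite /M !leq_max leqnn !orbT.
exists M; split=> //; split=> //; rewrite !lift_to_ops //.
congr (ops (A M) f); apply: functional_extensionality => i.
have [H1 [H2 H3]] := HN i; apply: lift_to_mono H3 H1 H2.
by apply: leq_trans (leq_maxr _ _); apply: (@leq_bigmax _ Nf i).
Qed.

Definition chain_union : algebra := quot_alg chain_eq.
Definition chain_in n (a : A n) : chain_union := quot_pi chain_eq (existT _ n a : chain_pre).

Lemma chain_in_embedding n : embedding (@chain_in n).
Proof.
have Hc := chain_eq_congruence; split=> [f args|a b /(quot_piP Hc) Hab].
  rewrite /chain_in -(quot_pi_hom Hc); apply/(quot_piP Hc).
  exists (maxn n (level (fun i => existT _ n (args i) : chain_elt))).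
  split; first exact: leq_maxl; split; first exact: leq_maxr.
  by rewrite lift_to_ops ?leq_maxr // (proj1 (lift_to_embedding (leq_maxl _ _))).
by apply: (proj2 (lift_to_embedding (leqnn n))); apply: (chain_eq_at Hab).
Qed.

Lemma chain_in_succ n (a : A n) : chain_in (e n a) = chain_in a.
Proof.
apply/(quot_piP chain_eq_congruence); exists n.+1; split=> //; split=> //.
by rewrite lift_to_self lift_to_succ // lift_to_self.
Qed.

Lemma chain_in_lift (x : chain_pre) N :
  projT1 x <= N -> chain_in (lift_to N x) = quot_pi chain_eq x.
Proof.
move=> Hx; apply/(quot_piP chain_eq_congruence); exists N; split=> //; split=> //.
by rewrite lift_to_self.
Qed.

Lemma eval_chain_pre (w : nat -> chain_pre) (t : term void) M :
  (forall n, toccurs n t -> projT1 (w n) <= M) ->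
  projT1 (eval (novoid chain_pre) w t) <= M /\
  lift_to M (eval (novoid chain_pre) w t) = eval (novoid (A M)) (fun n => lift_to M (w n)) t.
Proof.
elim: t => [n|[]|f args IH] /= Hw; first by split=> //; apply: Hw.
have K i := IH i (fun n Hn => Hw n (ex_intro _ i Hn)).
have Hm : level (fun i => eval (novoid chain_pre) w (args i)) <= M.
  by apply/bigmax_leqP => i _; apply: (proj1 (K i)).
split=> //; rewrite (lift_to_ops (f := f) (args := fun i => eval _ w (args i))) //.
by congr (ops (A M) f); apply: functional_extensionality => i; apply: (proj2 (K i)).
Qed.

Lemma chain_union_in_V : (forall n, V (A n)) -> V chain_union.
Proof.
move=> HA; apply: (quot_in_variety chain_eq_congruence) => p w Hp.
set M := \max_(n <- tvars p.1 ++ tvars p.2) projT1 (w n).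
have HM n : n \in tvars p.1 ++ tvars p.2 -> projT1 (w n) <= M.
  by move=> Hn; apply: (@leq_bigmax_seq _ _ xpredT (fun n => projT1 (w n))).
have [|K1 E1] := @eval_chain_pre w p.1 M; first by move=> n /tvarsP Hn; rewrite HM // mem_cat Hn.
have [|K2 E2] := @eval_chain_pre w p.2 M.
  by move=> n /tvarsP Hn; rewrite HM // mem_cat Hn orbT.
by exists M; split=> //; split=> //; rewrite E1 E2; apply: variety_eqn.
Qed.

Lemma chain_union_rep (ns : seq nat) (v : nat -> chain_union) : exists N (w : nat -> A N),
  forall n, n \in ns -> v n = chain_in (w n).
Proof.
have [r Hr] := choice _ (fun n => @quot_pi_surj _ chain_eq (v n)).
set N := \max_(n <- ns) projT1 (r n).
exists N, (fun n => lift_to N (r n)) => n Hn; rewrite chain_in_lift ?Hr //.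
exact: (@leq_bigmax_seq _ _ xpredT (fun n => projT1 (r n))).
Qed.

End ChainUnion.

Lemma eq_prim_sat (B : algebra) (w w' : nat -> B) gam dl :
  (forall n, n \in eqns_vars (gam ++ dl) -> w n = w' n) -> prim_sat w gam dl -> prim_sat w' gam dl.
Proof.
move=> Hw [Hg Hd]; have Hv := @eqns_vars_in_vars (gam ++ dl).
split=> [|e He He']; first by apply: eq_holds_all Hw Hg => e He; apply/Hv/List.in_or_app; left.
have He1 : eqns_vars_in (fun n => n \in eqns_vars (gam ++ dl)) [:: e].
  by move=> e' [<-|//]; apply/Hv/List.in_or_app; right.
have Hw' n : n \in eqns_vars (gam ++ dl) -> w' n = w n by move/Hw.
have Hw'e : holds_all w' [:: e] by move=> e' [<-|].
by apply: (Hd e He); apply: (eq_holds_all He1 Hw' Hw'e); left.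
Qed.

Section ExClosedExtension.
Hypothesis V_AP : AP F ar V.

(* The union of the chain [M = A 0 -> A 1 -> ...] in which [A (n+1)] realizes every
   primitive formula with parameters in [A n] that some extension realizes. *)
Lemma ex_closed_extension (M : algebra) : V M ->
  exists (B : algebra) (h : M -> B), ex_closed B /\ embedding h.
Proof.
move=> HM; pose VA := {B : algebra | V B}.
have stepf (X : VA) : {Y : VA & {e : proj1_sig X -> proj1_sig Y | embedding e /\
    forall gam dl y w, realizable gam dl y w ->
      exists b, prim_sat (upd (fun n => e (w n)) y b) gam dl}}.
  case: X => X HX; have [A2 H2] := constructive_indefinite_description _ (one_step_ext V_AP HX).
  have [e [HA2 He]] := constructive_indefinite_description _ H2.
  by exists (exist _ A2 HA2); exists e.
pose chain := fix chain (n : nat) : VA :=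
  if n is n'.+1 then projT1 (stepf (chain n')) else exist _ M HM.
pose A n := proj1_sig (chain n).
pose e n : A n -> A n.+1 := proj1_sig (projT2 (stepf (chain n))).
have He n : embedding (e n) := proj1 (proj2_sig (projT2 (stepf (chain n)))).
have Hreal n := proj2 (proj2_sig (projT2 (stepf (chain n)))).
exists (chain_union e), (@chain_in _ e 0); split; last exact: (chain_in_embedding He 0).
split; first exact: (chain_union_in_V He (fun n => proj2_sig (chain n))).
move=> gam dl y v [D [h [d [HD [Hh Hp]]]]].
have [N [w Hw]] := chain_union_rep He (eqns_vars (gam ++ dl)) v.
have [|b Hb] := Hreal N gam dl y w.
  exists D, (fun a => h (chain_in e a)), d; split=> //.
  split; first exact: embedding_comp (chain_in_embedding He N) Hh.
  by apply: eq_prim_sat Hp => n Hn; rewrite /Defs.upd; case: eqP => // _; rewrite Hw.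
exists (@chain_in _ e N.+1 b); have := prim_sat_embedding (chain_in_embedding He N.+1) Hb.
apply: eq_prim_sat => n Hn; rewrite /Defs.upd; case: eqP => // _.
by rewrite (chain_in_succ He) Hw.
Qed.

End ExClosedExtension.

(** * The model completion *)

Lemma diagram_sat_qfree (M A : algebra) (k : M -> A) (u : nat -> M) (q : form void) :
  models_th F ar (diagram F ar M) A k -> qfree q ->
  (sat (novoid A) (fun n => k (u n)) q <-> sat (novoid M) u q).
Proof.
move=> Hdiag; elim: q => [t1 t2|q IH|q IHq r IHr|q IHq r IHr|q IHq r IHr|n q IH|n q IH] //=;
  try by [case=> /IHq -> /IHr ->|move=> /IH ->].
move=> _; pose i (t : term void) : term M := tsubst (fun n => Cst (u n)) t.
have Hk v t : eval k v (i t) = eval (novoid A) (fun n => k (u n)) t by rewrite eval_tsubst.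
have HM v t : eval (fun x : M => x) v (i t) = eval (novoid M) u t by rewrite eval_tsubst.
have Hs t n : ~ toccurs n (i t) by case/toccurs_tsubst.
have Hd p : p = FEq (i t1) (i t2) \/ p = FNot (FEq (i t1) (i t2)) ->
    (forall v, sat (fun x : M => x) v p) -> forall v, sat k v p.
  move=> Hp HpM; apply: Hdiag; split; first by case: Hp => -> n [|] /Hs.
  by split=> //; exists (i t1), (i t2).
case: (classic (eval (novoid M) u t1 = eval (novoid M) u t2)) => E.
- have := Hd _ (or_introl erefl) (fun v => ltac:(by rewrite /= !HM)) (fun _ => k (u 0)).
  by rewrite /= !Hk.
- have := Hd _ (or_intror erefl) (fun v => ltac:(by rewrite /= !HM)) (fun _ => k (u 0)).
  by rewrite /= !Hk.
Qed.

(* Constants of [M] occurring in a sentence are replaced by fresh variables,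
   numbered past all variables of the sentence and interpreted through [u]. *)
Lemma abstract_sentence (M : algebra) (p : form M) : sentence p ->
  exists (q : form void) (u : nat -> M), forall (A : algebra) (k : M -> A) v,
    sat k v p <-> sat (novoid A) (fun n => k (u n)) q.
Proof.
move=> Hp; pose bnd := (\max_(n <- form_vars p) n).+1.
have Hbnd n : n \in form_vars p -> n < bnd.
  by move=> Hn; rewrite ltnS; apply: (@leq_bigmax_seq _ _ xpredT id n).
pose e (q : seq nat) := bnd + pickle q.
have He q : e q \notin form_vars p by apply/negP => /Hbnd; rewrite /e ltnNge leq_addr.
pose u x := if bnd <= x then
    (if unpickle (x - bnd) is Some q then odflt (celt M) (const_at_form p q) else celt M)
  else celt M.
exists (abstract_form e p), u => A k v.
rewrite (eq_sat_free k (w := fun n => k (u n))) => [|n /Hp //].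
by apply: sat_abstract_form => // q m Hq; rewrite /u /e leq_addr addKn pickleK Hq.
Qed.

Section ModelCompletion.
Variable alpha : seq eqn.
Hypothesis alpha_vars : eqns_vars_in (fun n => n < 4) alpha.
Hypothesis alpha_Cg : forall A, V A -> forall a1 a2 b1 b2 : A,
  in_Cg F ar b1 b2 a1 a2 <->
  sat (novoid A) (fun n => nth a1 [:: a1; a2; b1; b2] n) (conj_eqs alpha).
Hypothesis V_coherent : coherent F ar V.
Hypothesis V_AP : AP F ar V.
Hypothesis V_EVRP : EVRP F ar c hc V.

Definition ec_theory (p : form void) : Prop :=
  sentence p /\ forall B, ex_closed B -> forall v, sat (novoid B) v p.

Lemma ThV_model_in_V (M : algebra) : Lmodel F ar (ThV F ar V) M -> V M.
Proof.
move=> HM; apply/V_def => e He v.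
have Hs : ThV F ar V (univ_closure (FEq e.1 e.2)).
  split; first exact: univ_closure_sentence.
  by move=> A HA w; apply/sat_univ_closure => w'; apply: variety_eqn.
exact: (proj1 (sat_univ_closure _ _ _) (HM _ Hs v) v).
Qed.

Lemma ec_theory_models (B : algebra) : ex_closed B -> Lmodel F ar ec_theory B.
Proof. by move=> HB p [_ Hp]; apply: Hp. Qed.

Lemma ec_theory_qe (p : form void) : exists q, qfree q /\
  forall B : algebra, Lmodel F ar ec_theory B ->
    forall v, sat (novoid B) v p <-> sat (novoid B) v q.
Proof.
have [q [Hq Hpq]] := ex_closed_qe alpha_vars alpha_Cg V_coherent V_AP V_EVRP p.
exists q; split=> // B HB v.
have Hs : ec_theory (univ_closure (FAnd (FImp p q) (FImp q p))).
  split; first exact: univ_closure_sentence.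
  by move=> B' HB' w; apply/sat_univ_closure => w' /=; rewrite (Hpq B' w' HB').
by have /= := proj1 (sat_univ_closure _ _ _) (HB _ Hs v) v; tauto.
Qed.

Lemma ec_theory_model_complete : model_complete F ar ec_theory.
Proof.
move=> A B h HA HB Hh p v; have [q [Hq Hpq]] := ec_theory_qe p.
rewrite (Hpq A HA v) (Hpq B HB (fun n => h (v n))).
by apply: embedding_sat_qfree => //; case.
Qed.

Lemma universal_sat_down (A B : algebra) (h : A -> B) (p : form void) :
  embedding h -> universal F ar p ->
  (forall v, sat (novoid B) v p) -> forall v, sat (novoid A) v p.
Proof.
move=> Hh; elim=> [q Hq|n q _ IH] HB v.
- by apply/(embedding_sat_qfree v Hh) => //; case.
- by move=> a /=; apply: IH => v'; have := HB v' (v' n); rewrite upd_id.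
Qed.

Lemma ec_theory_universal p : sentence p -> universal F ar p ->
  (entails F ar (ThV F ar V) p <-> entails F ar ec_theory p).
Proof.
move=> Hs Hu; split=> H A k HA v.
  by apply: H => q [Hq HVq]; apply: HA; split=> // B [HB _]; apply: HVq.
have /ThV_model_in_V HVA : Lmodel F ar (ThV F ar V) A by move=> q Hq w; apply/sat_void/HA.
have [B [h [HB Hh]]] := ex_closed_extension V_AP HVA.
apply/sat_void/(universal_sat_down Hh Hu) => w.
exact: H B (novoid B) (ec_theory_models HB) w.
Qed.

Lemma ec_theory_complete (M : algebra) :
  Lmodel F ar (ThV F ar V) M -> complete_th F ar (th_plus_diagram F ar ec_theory M).
Proof.
move=> /ThV_model_in_V HM.
have Hth (A : algebra) (k : M -> A) : models_th F ar (th_plus_diagram F ar ec_theory M) A k ->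
    Lmodel F ar ec_theory A.
  move=> H q Hq v; apply: (@sat_void _ (fun x => k (novoid M x))).
  by have := H _ (or_introl (ex_intro _ q (conj Hq erefl))) v; rewrite fmap_sat.
split.
  have [B [h [HB Hh]]] := ex_closed_extension V_AP HM.
  exists B, h => p [[q [Hq ->]]|[Hs [[t1 [t2 Ht]] Hp]]] v.
    by rewrite fmap_sat; apply/sat_void/(ec_theory_models HB).
  apply: (sentence_sat (v := fun _ => h (celt M))) => //.
  by apply/(embedding_sat_qfree _ Hh (k := id)) => //; case: Ht => ->.
move=> p Hs; have [q [u Hqu]] := abstract_sentence Hs.
have [q' [Hq' Hqq']] := ec_theory_qe q.
have Key (A : algebra) (k : M -> A) v : models_th F ar (th_plus_diagram F ar ec_theory M) A k ->
    sat k v p <-> sat (novoid M) u q'.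
  move=> H; rewrite Hqu (Hqq' A (Hth A k H)) diagram_sat_qfree //.
  by move=> r Hr; apply: H; right.
by case: (classic (sat (novoid M) u q')) => K; [left|right] => A k H v /=; rewrite Key.
Qed.

End ModelCompletion.

End Constant.
End Variety.
End Algebra.

Theorem proposition4p7 (F : Type) (ar : F -> nat) (c : F) (hc : ar c = 0)
  (V : algebra F ar -> Prop) :
  is_variety F ar V -> EDPC F ar V -> coherent F ar V -> AP F ar V ->
  EVRP F ar c hc V ->
  has_model_completion F ar (ThV F ar V).
Proof.
move=> [Eqs V_def] [alpha [alpha_vars alpha_Cg]] V_coherent V_AP V_EVRP.
exists (ec_theory V); split; first by move=> p [].
split; first exact: (ec_theory_model_complete V_def alpha_vars alpha_Cg V_coherent V_AP V_EVRP).
split; first by move=> p; apply: (ec_theory_universal V_def hc V_AP).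
by move=> M; apply: (ec_theory_complete V_def alpha_vars alpha_Cg V_coherent V_AP V_EVRP).
Qed.
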